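(* Let $A$ be a self-contained band operator on $\ell^2(\mathbb{Z})$. Then $\nu(A)=\nu(A^* )$, and \[ \nu_N(A)\searrow\nu(A)=\frac{1}{\|A^{-1}\|}\qquad\text{as }N\to\infty. \]
   Context: A band operator on $\ell^2(\mathbb{Z})$ is a bounded operator with matrix entries $A_{ij}=0$ for $|i-j|>w$ (some $w$). For $N\in\mathbb{N}$, an $N$-column submatrix of $A$ is $C=(C_{ij})_{i\in1-w..N+w,\,j\in1..N}$ with $C_{ij}=A_{k+i,k+j}$ for some $k\in\mathbb{Z}$ (where $a..b=\{n\in\mathbb{Z}:a\le n\le b\}$); $A$ is self-contained if each such submatrix (for every $N$) occurs for infinitely many $k$. $\nu(A):=\inf\{\|Ax\|:\|x\|=1\}$; $\nu_N(A):=\inf\{\|Ax\|:\|x\|=1,\operatorname{diam}(\operatorname{supp}x)<N\}$. Convention: $\|A^{-1}\|:=\infty$ if $A$ is not invertible and $1/\infty=0$. *)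

From Stdlib Require Import Reals Lra ZArith ClassicalEpsilon.
From Coquelicot Require Import Coquelicot.
Open Scope R_scope.

Definition seqZ := Z -> C.

(* Sum over Z of |x_i|^2, written as a series over nat pairing i = n and i = -n-1. *)
Definition sq_terms (x : seqZ) (n : nat) : R :=
  (Cmod (x (Z.of_nat n)))^2 + (Cmod (x (- Z.of_nat n - 1)%Z))^2.

Definition in_l2 (x : seqZ) : Prop := ex_series (sq_terms x).

Definition l2norm (x : seqZ) : R := sqrt (Series (sq_terms x)).

Definition matZ := Z -> Z -> C.

Definition banded (a : matZ) (w : nat) : Prop :=
  forall i j : Z, (Z.of_nat w < Z.abs (i - j))%Z -> a i j = 0%C.

Fixpoint csum (n : nat) (f : nat -> C) : C :=
  match n with
  | O => 0%C
  | S n' => Cplus (csum n' f) (f n')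
  end.

(* Action of a w-banded matrix on a sequence: (Ax)_i = sum_{j=i-w}^{i+w} A_ij x_j
   (all other terms vanish by bandedness). *)
Definition bapply (a : matZ) (w : nat) (x : seqZ) : seqZ :=
  fun i => csum (2 * w + 1)
    (fun m => Cmult (a i (i - Z.of_nat w + Z.of_nat m)%Z)
                    (x (i - Z.of_nat w + Z.of_nat m)%Z)).

Definition band_operator (a : matZ) (w : nat) : Prop :=
  banded a w /\
  exists M : R, forall x : seqZ, in_l2 x ->
    in_l2 (bapply a w x) /\ l2norm (bapply a w x) <= M * l2norm x.

Definition adjmat (a : matZ) : matZ := fun i j => Cconj (a j i).

Definition same_submatrix (a : matZ) (w N : nat) (k k' : Z) : Prop :=
  forall i j : Z,
    (1 - Z.of_nat w <= i <= Z.of_nat N + Z.of_nat w)%Z ->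
    (1 <= j <= Z.of_nat N)%Z ->
    a (k' + i)%Z (k' + j)%Z = a (k + i)%Z (k + j)%Z.

Definition self_contained (a : matZ) (w : nat) : Prop :=
  forall (N : nat) (k : Z) (M : Z),
    exists k' : Z, (M < Z.abs k')%Z /\ same_submatrix a w N k k'.

Definition nu (a : matZ) (w : nat) : R :=
  real (Glb_Rbar (fun r => exists x : seqZ,
          in_l2 x /\ l2norm x = 1 /\ r = l2norm (bapply a w x))).

Definition nuN (a : matZ) (w : nat) (N : nat) : R :=
  real (Glb_Rbar (fun r => exists x : seqZ,
          in_l2 x /\ l2norm x = 1 /\
          (forall i j : Z, x i <> 0%C -> x j <> 0%C -> (Z.abs (i - j) < Z.of_nat N)%Z) /\
          r = l2norm (bapply a w x))).

Definition invertible (a : matZ) (w : nat) : Prop :=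
  forall y : seqZ, in_l2 y ->
    exists x : seqZ, in_l2 x /\ (forall i, bapply a w x i = y i) /\
      forall x' : seqZ, in_l2 x' -> (forall i, bapply a w x' i = y i) ->
        forall i, x' i = x i.

(* ||A^{-1}|| = sup { ||A^{-1} y|| : ||y|| = 1 }, where A^{-1} y is the
   (unique, when A is invertible) x in l^2 with Ax = y. *)
Definition inv_norm (a : matZ) (w : nat) : Rbar :=
  Lub_Rbar (fun r => exists y : seqZ, in_l2 y /\ l2norm y = 1 /\
     exists x : seqZ, in_l2 x /\ (forall i, bapply a w x i = y i) /\ r = l2norm x).

(* 1 / ||A^{-1}||, with ||A^{-1}|| := oo if A is not invertible, and 1/oo = 0. *)
Definition recip_inv_norm (a : matZ) (w : nat) : R :=
  if excluded_middle_informative (invertible a w) then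
    match inv_norm a w with
    | Finite r => 1 / r
    | _ => 0
    end
  else 0.

(* If nu(A^* ) > nu(A), take a finitely supported unit vector v with ||A v|| < nu(A^* ).
   Self-containedness yields 2w+1 far-apart translates v_k of v on which A acts by
   translating A v, so that A is isometric up to the factor ||A v|| on their span.
   In a window of size 2R, these 2w+1 vectors together with the 2R-2w vectors spanning
   A^* applied to the window shrunk by w are linearly dependent: some V = sum g_k v_k
   equals A^* delta.  Then ||V||^2 = <delta, A V> <= ||delta|| ||A v|| ||V|| and
   nu(A^* ) ||delta|| <= ||V|| force V = 0, hence delta = 0 and g = 0, a contradiction.
   Applied to A^* as well, this gives nu(A) = nu(A^* ).

   Finitely supported vectors are dense in l^2, which gives nu_N(A) -> nu(A).
   If nu(A) = nu(A^* ) > 0, then A is injective, and the Landweber iteration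
   r |-> r - t A A^* r with t = 1/M^2, M >= ||A||, contracts by sqrt(1 - nu(A^* )^2 / M^2), so the
   corrections t A^* r sum to a preimage of any y: A is invertible with
   ||A^-1|| = 1/nu(A).  If nu(A) = 0, an inverse, if any, is unbounded. *)

From Stdlib Require Import Reals Lra Lia ZArith ClassicalEpsilon FunctionalExtensionality Classical.
From Coquelicot Require Import Coquelicot.
Open Scope R_scope.

Fixpoint rsum (n : nat) (f : nat -> R) : R :=
  match n with O => 0 | S n' => rsum n' f + f n' end.

Lemma rsum_ext n f g : (forall k, (k < n)%nat -> f k = g k) -> rsum n f = rsum n g.
Proof. induction n; simpl; intros H; auto. rewrite IHn by (intros; apply H; lia). rewrite H by lia. auto. Qed.

Lemma rsum_plus n f g : rsum n (fun k => f k + g k) = rsum n f + rsum n g.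
Proof. induction n; simpl; [lra | rewrite IHn; lra]. Qed.

Lemma rsum_scal n c f : rsum n (fun k => c * f k) = c * rsum n f.
Proof. induction n; simpl; [lra | rewrite IHn; lra]. Qed.

Lemma rsum_opp n f : rsum n (fun k => - f k) = - rsum n f.
Proof. induction n; simpl; [lra | rewrite IHn; lra]. Qed.

Lemma rsum_const n c : rsum n (fun _ => c) = INR n * c.
Proof. induction n; simpl rsum. simpl; ring. rewrite IHn, S_INR. ring. Qed.

Lemma rsum_le n f g : (forall k, (k < n)%nat -> f k <= g k) -> rsum n f <= rsum n g.
Proof.
  induction n; simpl; intros H; [lra |].
  assert (rsum n f <= rsum n g) by (apply IHn; intros; apply H; lia).
  pose proof (H n ltac:(lia)). lra.
Qed.

Lemma rsum_eq0 n f : (forall k, (k < n)%nat -> f k = 0) -> rsum n f = 0.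
Proof. induction n; simpl; intros H; [lra |]. rewrite IHn, H by (intros; try apply H; lia). lra. Qed.

Lemma rsum_nonneg n f : (forall k, (k < n)%nat -> 0 <= f k) -> 0 <= rsum n f.
Proof. intros H. rewrite <- (rsum_eq0 n (fun _ => 0)) by auto. apply rsum_le. auto. Qed.

Lemma rsum_ge_term n f k : (forall j, (j < n)%nat -> 0 <= f j) -> (k < n)%nat -> f k <= rsum n f.
Proof.
  induction n; intros H Hk; [lia |]. simpl. destruct (Nat.eq_dec k n) as [-> | Hkn].
  - assert (0 <= rsum n f) by (apply rsum_nonneg; intros; apply H; lia). lra.
  - assert (f k <= rsum n f) by (apply IHn; auto; lia). pose proof (H n ltac:(lia)). lra.
Qed.

Lemma rsum_split a b f : rsum (a + b) f = rsum a f + rsum b (fun k => f (a + k)%nat).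
Proof. induction b; simpl. rewrite Nat.add_0_r; lra. rewrite Nat.add_succ_r; simpl; rewrite IHb; lra. Qed.

Lemma rsum_swap n m F :
  rsum n (fun i => rsum m (fun j => F i j)) = rsum m (fun j => rsum n (fun i => F i j)).
Proof. induction n; simpl. rewrite rsum_eq0; auto. rewrite IHn, <- rsum_plus. auto. Qed.

Lemma sum_n_rsum a n : sum_n a n = rsum (S n) a.
Proof. induction n. simpl. rewrite sum_O. lra. rewrite sum_Sn, IHn. reflexivity. Qed.

Lemma csum_ext n (f g : nat -> C) : (forall k, (k < n)%nat -> f k = g k) -> csum n f = csum n g.
Proof. induction n; simpl; intros H; auto. rewrite IHn by (intros; apply H; lia). rewrite H by lia. auto. Qed.

Lemma csum_eq0 n (f : nat -> C) : (forall k, (k < n)%nat -> f k = 0%C) -> csum n f = 0%C.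
Proof. induction n; simpl; intros H; auto. rewrite IHn, H by (intros; try apply H; lia). ring. Qed.

Lemma csum_plus n (f g : nat -> C) : csum n (fun k => f k + g k)%C = (csum n f + csum n g)%C.
Proof. induction n; simpl. ring. rewrite IHn. ring. Qed.

Lemma csum_scal_r n (c : C) (f : nat -> C) : csum n (fun k => f k * c)%C = (csum n f * c)%C.
Proof. induction n; simpl. ring. rewrite IHn. ring. Qed.

Lemma csum_opp n (f : nat -> C) : csum n (fun k => - f k)%C = (- csum n f)%C.
Proof. induction n; simpl. ring. rewrite IHn. ring. Qed.

Lemma csum_split a b (f : nat -> C) : csum (a + b) f = (csum a f + csum b (fun k => f (a + k)%nat))%C.
Proof. induction b; simpl. rewrite Nat.add_0_r. ring. rewrite Nat.add_succ_r. simpl. rewrite IHb. ring. Qed.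

Lemma csum_pair n g : csum n g = (rsum n (fun m => fst (g m)), rsum n (fun m => snd (g m))).
Proof. induction n; simpl. reflexivity. rewrite IHn. reflexivity. Qed.

(* [zsum lo hi f] sums [f i] over [lo <= i < hi]. *)
Definition zsum (lo hi : Z) (f : Z -> R) : R :=
  rsum (Z.to_nat (hi - lo)) (fun t => f (lo + Z.of_nat t)%Z).

Lemma zsum_split lo m hi f : (lo <= m <= hi)%Z -> zsum lo hi f = zsum lo m f + zsum m hi f.
Proof.
  intros H. unfold zsum.
  replace (Z.to_nat (hi - lo)) with (Z.to_nat (m - lo) + Z.to_nat (hi - m))%nat by lia.
  rewrite rsum_split. f_equal. apply rsum_ext. intros k _. f_equal. lia.
Qed.

Lemma zsum_empty lo hi f : (hi <= lo)%Z -> zsum lo hi f = 0.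
Proof. intros H. unfold zsum. replace (Z.to_nat (hi - lo)) with O by lia. reflexivity. Qed.

Lemma zsum1 lo f : zsum lo (lo + 1) f = f lo.
Proof. unfold zsum. replace (Z.to_nat (lo + 1 - lo)) with 1%nat by lia. simpl. rewrite Z.add_0_r. lra. Qed.

Lemma zsum_snoc lo hi f : (lo <= hi)%Z -> zsum lo (hi + 1) f = zsum lo hi f + f hi.
Proof. intros H. rewrite (zsum_split lo hi) by lia. rewrite zsum1. auto. Qed.

Lemma zsum_ext lo hi f g : (forall i, (lo <= i < hi)%Z -> f i = g i) -> zsum lo hi f = zsum lo hi g.
Proof. intros H. apply rsum_ext. intros k Hk. apply H. lia. Qed.

Lemma zsum_plus lo hi f g : zsum lo hi (fun i => f i + g i) = zsum lo hi f + zsum lo hi g.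
Proof. apply rsum_plus. Qed.

Lemma zsum_scal lo hi c f : zsum lo hi (fun i => c * f i) = c * zsum lo hi f.
Proof. apply rsum_scal. Qed.

Lemma zsum_opp lo hi f : zsum lo hi (fun i => - f i) = - zsum lo hi f.
Proof. apply rsum_opp. Qed.

Lemma zsum_le lo hi f g : (forall i, (lo <= i < hi)%Z -> f i <= g i) -> zsum lo hi f <= zsum lo hi g.
Proof. intros H. apply rsum_le. intros k Hk. apply H. lia. Qed.

Lemma zsum_eq0 lo hi f : (forall i, (lo <= i < hi)%Z -> f i = 0) -> zsum lo hi f = 0.
Proof. intros H. apply rsum_eq0. intros k Hk. apply H. lia. Qed.

Lemma zsum_nonneg lo hi f : (forall i, (lo <= i < hi)%Z -> 0 <= f i) -> 0 <= zsum lo hi f.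
Proof. intros H. apply rsum_nonneg. intros k Hk. apply H. lia. Qed.

Lemma zsum_swap lo1 hi1 lo2 hi2 F :
  zsum lo1 hi1 (fun i => zsum lo2 hi2 (fun j => F i j))
  = zsum lo2 hi2 (fun j => zsum lo1 hi1 (fun i => F i j)).
Proof. apply rsum_swap. Qed.

Lemma zsum_shift lo hi s f : zsum lo hi (fun i => f (i + s)%Z) = zsum (lo + s) (hi + s) f.
Proof.
  unfold zsum. replace (hi + s - (lo + s))%Z with (hi - lo)%Z by lia.
  apply rsum_ext. intros k _. f_equal. lia.
Qed.

Lemma zsum_restrict lo hi a b f : (lo <= a <= b)%Z -> (b <= hi)%Z ->
  (forall i, (lo <= i < hi)%Z -> (i < a \/ b <= i)%Z -> f i = 0) -> zsum lo hi f = zsum a b f.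
Proof.
  intros H1 H2 H. rewrite (zsum_split lo a hi), (zsum_split a b hi) by lia.
  rewrite (zsum_eq0 lo a), (zsum_eq0 b hi) by (intros; apply H; lia). lra.
Qed.

Lemma zsum_le_widen lo hi a b f : (lo <= a <= b)%Z -> (b <= hi)%Z ->
  (forall i, (lo <= i < hi)%Z -> 0 <= f i) -> zsum a b f <= zsum lo hi f.
Proof.
  intros H1 H2 H. rewrite (zsum_split lo a hi), (zsum_split a b hi) by lia.
  assert (0 <= zsum lo a f) by (apply zsum_nonneg; intros; apply H; lia).
  assert (0 <= zsum b hi f) by (apply zsum_nonneg; intros; apply H; lia). lra.
Qed.

Definition czsum (lo hi : Z) (f : Z -> C) : C :=
  (zsum lo hi (fun i => fst (f i)), zsum lo hi (fun i => snd (f i))).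

Lemma czsum_csum lo hi f : czsum lo hi f = csum (Z.to_nat (hi - lo)) (fun t => f (lo + Z.of_nat t)%Z).
Proof. rewrite csum_pair. reflexivity. Qed.

Lemma czsum_ext lo hi (f g : Z -> C) :
  (forall i, (lo <= i < hi)%Z -> f i = g i) -> czsum lo hi f = czsum lo hi g.
Proof. intros H. unfold czsum. f_equal; apply zsum_ext; intros; rewrite H; auto. Qed.

Lemma czsum_restrict lo hi a b (f : Z -> C) : (lo <= a <= b)%Z -> (b <= hi)%Z ->
  (forall i, (lo <= i < hi)%Z -> (i < a \/ b <= i)%Z -> f i = 0%C) -> czsum lo hi f = czsum a b f.
Proof. intros H1 H2 H. unfold czsum. f_equal; apply zsum_restrict; auto; intros; rewrite H; auto. Qed.

Lemma czsum_eq0 lo hi (f : Z -> C) : (forall i, (lo <= i < hi)%Z -> f i = 0%C) -> czsum lo hi f = 0%C.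
Proof. intros H. unfold czsum. rewrite !zsum_eq0; auto; intros; rewrite H; auto. Qed.

Lemma czsum_plus lo hi f g : czsum lo hi (fun i => f i + g i)%C = (czsum lo hi f + czsum lo hi g)%C.
Proof. unfold czsum. simpl. rewrite !zsum_plus. reflexivity. Qed.

Lemma czsum_scal lo hi c f : czsum lo hi (fun i => c * f i)%C = (c * czsum lo hi f)%C.
Proof.
  unfold czsum, Cmult. simpl. f_equal.
  - rewrite (zsum_ext _ _ _ (fun i => fst c * fst (f i) + - (snd c * snd (f i)))) by (intros; lra).
    rewrite zsum_plus, zsum_opp, !zsum_scal. lra.
  - rewrite zsum_plus, !zsum_scal. lra.
Qed.

Lemma czsum_shift lo hi s f : czsum lo hi (fun i => f (i + s)%Z) = czsum (lo + s) (hi + s) f.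
Proof. unfold czsum. f_equal; rewrite <- zsum_shift; auto. Qed.

(* [Re (u * conj v)]: the real part of inner products suffices for all norm estimates. *)
Definition dotC (u v : C) : R := fst u * fst v + snd u * snd v.

Definition nsq lo hi (x : seqZ) := zsum lo hi (fun i => Cmod (x i) ^ 2).
Definition ip lo hi (x z : seqZ) := zsum lo hi (fun i => dotC (x i) (z i)).

Definition vadd (x y : seqZ) : seqZ := fun i => (x i + y i)%C.
Definition vscal (c : C) (x : seqZ) : seqZ := fun i => (c * x i)%C.
Definition vsub (x y : seqZ) : seqZ := fun i => (x i - y i)%C.
Definition vzero : seqZ := fun _ => 0%C.

Lemma Cmod2_fst_snd u : Cmod u ^ 2 = fst u ^ 2 + snd u ^ 2.
Proof. apply Cmod2_alt. Qed.

Lemma Cmod2_dotC u : Cmod u ^ 2 = dotC u u.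
Proof. rewrite Cmod2_fst_snd. unfold dotC. ring. Qed.

Lemma dotC_le u v : dotC u v <= Cmod u * Cmod v.
Proof.
  unfold Cmod, dotC. rewrite <- sqrt_mult by (apply Rplus_le_le_0_compat; apply pow2_ge_0).
  destruct (Rle_or_lt (fst u * fst v + snd u * snd v) 0) as [H | H].
  - pose proof (sqrt_pos ((fst u ^ 2 + snd u ^ 2) * (fst v ^ 2 + snd v ^ 2))). lra.
  - rewrite <- (sqrt_square (fst u * fst v + snd u * snd v)) at 1 by lra.
    apply sqrt_le_1_alt. pose proof (pow2_ge_0 (fst u * snd v - snd u * fst v)). nra.
Qed.

Lemma dotC_comm u v : dotC u v = dotC v u.
Proof. unfold dotC; ring. Qed.

Lemma dotC_mult u x z : dotC (u * x)%C z = dotC x (Cconj u * z)%C.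
Proof. unfold dotC; simpl; ring. Qed.

Lemma Cmod2_add u v : Cmod (u + v)%C ^ 2 = Cmod u ^ 2 + 2 * dotC u v + Cmod v ^ 2.
Proof. rewrite !Cmod2_fst_snd. unfold dotC; simpl; ring. Qed.

Lemma Cmod2_sub_scal (x y : C) (t : R) :
  Cmod (x - t * y)%C ^ 2 = Cmod x ^ 2 - 2 * t * dotC x y + t ^ 2 * Cmod y ^ 2.
Proof. rewrite !Cmod2_fst_snd. unfold dotC. simpl. ring. Qed.

Lemma Cmod_le_Rabs_fst_snd z : Cmod z <= Rabs (fst z) + Rabs (snd z).
Proof.
  pose proof (Rabs_pos (fst z)). pose proof (Rabs_pos (snd z)).
  unfold Cmod. rewrite <- (sqrt_square (Rabs (fst z) + Rabs (snd z))) by lra.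
  apply sqrt_le_1_alt. rewrite <- (pow2_abs (fst z)), <- (pow2_abs (snd z)). nra.
Qed.

Lemma dotC_czsum lo hi f v : dotC (czsum lo hi f) v = zsum lo hi (fun i => dotC (f i) v).
Proof.
  unfold dotC, czsum; simpl.
  rewrite Rmult_comm, <- zsum_scal, (Rmult_comm _ (snd v)), <- zsum_scal, <- zsum_plus.
  apply zsum_ext; intros; ring.
Qed.

Lemma dotC_czsum_r u lo hi f : dotC u (czsum lo hi f) = zsum lo hi (fun i => dotC u (f i)).
Proof. rewrite dotC_comm, dotC_czsum. apply zsum_ext. intros; apply dotC_comm. Qed.

Lemma zsum_cauchy_schwarz lo hi p q :
  zsum lo hi (fun i => p i * q i)
  <= sqrt (zsum lo hi (fun i => p i ^ 2)) * sqrt (zsum lo hi (fun i => q i ^ 2)).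
Proof.
  set (S := zsum lo hi (fun i => p i * q i)).
  set (P := zsum lo hi (fun i => p i ^ 2)). set (Q := zsum lo hi (fun i => q i ^ 2)).
  assert (HP : 0 <= P) by (apply zsum_nonneg; intros; apply pow2_ge_0).
  assert (HQ : 0 <= Q) by (apply zsum_nonneg; intros; apply pow2_ge_0).
  assert (key : forall l, 0 < l -> 2 * l * S <= P + l ^ 2 * Q).
  { intros l Hl. unfold S, P, Q. rewrite <- zsum_scal, <- zsum_scal, <- zsum_plus.
    apply zsum_le. intros i _. pose proof (pow2_ge_0 (p i - l * q i)). nra. }
  pose proof (sqrt_pos P). pose proof (sqrt_pos Q).
  destruct (Rle_or_lt S 0) as [HS | HS]; [nra |].
  destruct (Req_dec Q 0) as [HQ0 | HQ0].
  { pose proof (key ((P + 1) / S) ltac:(apply Rdiv_lt_0_compat; lra)) as Hk.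
    rewrite HQ0, Rmult_0_r in Hk.
    replace (2 * ((P + 1) / S) * S) with (2 * (P + 1)) in Hk by (field; lra). lra. }
  destruct (Req_dec P 0) as [HP0 | HP0].
  { assert (Hl : 0 < S / (Q + 1)) by (apply Rdiv_lt_0_compat; lra).
    pose proof (key (S / (Q + 1)) Hl) as Hk. set (l := S / (Q + 1)) in *.
    assert (l * (Q + 1) = S) by (unfold l; field; lra). rewrite HP0 in Hk. nra. }
  assert (0 < sqrt P) by (apply sqrt_lt_R0; lra). assert (0 < sqrt Q) by (apply sqrt_lt_R0; lra).
  pose proof (key (sqrt P / sqrt Q) ltac:(apply Rdiv_lt_0_compat; lra)) as Hk.
  replace ((sqrt P / sqrt Q) ^ 2 * Q) with P in Hk.
  2:{ unfold Rdiv. rewrite Rpow_mult_distr, pow_inv, !pow2_sqrt by lra. field. auto. }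
  apply (Rmult_le_reg_r (sqrt P / sqrt Q)). apply Rdiv_lt_0_compat; lra.
  replace (sqrt P * sqrt Q * (sqrt P / sqrt Q)) with (sqrt P * sqrt P) by (field; lra).
  rewrite sqrt_sqrt; lra.
Qed.

Lemma ip_cauchy_schwarz lo hi x z : ip lo hi x z <= sqrt (nsq lo hi x) * sqrt (nsq lo hi z).
Proof. eapply Rle_trans. apply zsum_le. intros; apply dotC_le. apply zsum_cauchy_schwarz. Qed.

Lemma nsq_nonneg lo hi x : 0 <= nsq lo hi x.
Proof. apply zsum_nonneg. intros; apply pow2_ge_0. Qed.

Lemma ip_self lo hi x : ip lo hi x x = nsq lo hi x.
Proof. apply zsum_ext. intros. rewrite Cmod2_dotC. auto. Qed.

Lemma nsq_vadd lo hi x y : nsq lo hi (vadd x y) = nsq lo hi x + 2 * ip lo hi x y + nsq lo hi y.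
Proof.
  unfold nsq, ip, vadd. rewrite <- zsum_scal, <- !zsum_plus.
  apply zsum_ext. intros. apply Cmod2_add.
Qed.

Lemma nsq_sub_scal lo hi x y (t : R) :
  nsq lo hi (vsub x (vscal t y)) = nsq lo hi x - 2 * t * ip lo hi x y + t ^ 2 * nsq lo hi y.
Proof.
  unfold nsq, ip, vsub, vscal, Rminus. rewrite <- !zsum_scal, <- zsum_opp, <- !zsum_plus.
  apply zsum_ext. intros. rewrite Cmod2_sub_scal. ring.
Qed.

Lemma nsq_minkowski lo hi x y :
  sqrt (nsq lo hi (vadd x y)) <= sqrt (nsq lo hi x) + sqrt (nsq lo hi y).
Proof.
  pose proof (nsq_nonneg lo hi x). pose proof (nsq_nonneg lo hi y).
  pose proof (sqrt_pos (nsq lo hi x)). pose proof (sqrt_pos (nsq lo hi y)).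
  rewrite <- (sqrt_square (sqrt (nsq lo hi x) + sqrt (nsq lo hi y))) by lra.
  apply sqrt_le_1_alt. rewrite nsq_vadd. pose proof (ip_cauchy_schwarz lo hi x y).
  pose proof (sqrt_sqrt (nsq lo hi x) ltac:(lra)). pose proof (sqrt_sqrt (nsq lo hi y) ltac:(lra)).
  nra.
Qed.

Definition l2sq (x : seqZ) := Series (sq_terms x).

Lemma sq_terms_nonneg x n : 0 <= sq_terms x n.
Proof. unfold sq_terms. apply Rplus_le_le_0_compat; apply pow2_ge_0. Qed.

Lemma rsum_sq_terms x n : rsum n (sq_terms x) = nsq (- Z.of_nat n) (Z.of_nat n) x.
Proof.
  induction n.
  - simpl. unfold nsq. rewrite zsum_empty; auto. lia.
  - simpl rsum. rewrite IHn. unfold nsq.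
    rewrite (zsum_split (- Z.of_nat (S n)) (- Z.of_nat n) (Z.of_nat (S n))) by lia.
    assert (E : forall f, zsum (- Z.of_nat (S n)) (- Z.of_nat n) f = f (- Z.of_nat n - 1)%Z).
    { intros f. replace (- Z.of_nat n)%Z with (- Z.of_nat (S n) + 1)%Z by lia.
      rewrite zsum1. f_equal. lia. }
    rewrite E. replace (Z.of_nat (S n)) with (Z.of_nat n + 1)%Z by lia.
    rewrite zsum_snoc by lia. unfold sq_terms. lra.
Qed.

Lemma l2_partial_sums_lim x : in_l2 x -> is_lim_seq (fun n => rsum n (sq_terms x)) (l2sq x).
Proof.
  intros H. apply is_lim_seq_incr_1. eapply is_lim_seq_ext; [| apply Series_correct, H].
  intros n. simpl. rewrite sum_n_rsum. reflexivity.
Qed.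

Lemma rsum_sq_terms_incr x n : rsum n (sq_terms x) <= rsum (S n) (sq_terms x).
Proof. simpl. pose proof (sq_terms_nonneg x n). lra. Qed.

Lemma rsum_sq_terms_le x n : in_l2 x -> rsum n (sq_terms x) <= l2sq x.
Proof.
  intros H. apply (is_lim_seq_incr_compare (fun n => rsum n (sq_terms x))).
  apply l2_partial_sums_lim, H. apply rsum_sq_terms_incr.
Qed.

Lemma l2_of_rsum_bound x B : (forall n, rsum n (sq_terms x) <= B) -> in_l2 x /\ l2sq x <= B.
Proof.
  intros H.
  assert (E : ex_finite_lim_seq (sum_n (sq_terms x))).
  { apply (ex_finite_lim_seq_incr _ B); intros n; rewrite !sum_n_rsum;
      [apply rsum_sq_terms_incr | apply H]. }
  destruct E as [l Hl].
  assert (Hs : is_series (sq_terms x) l) by exact Hl.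
  split. exists l; auto.
  unfold l2sq. rewrite (is_series_unique _ _ Hs).
  assert (Hle : Rbar_le l B).
  { eapply is_lim_seq_le; [| exact Hl | apply is_lim_seq_const].
    intros n. rewrite sum_n_rsum. apply H. }
  exact Hle.
Qed.

Lemma l2sq_nonneg x : in_l2 x -> 0 <= l2sq x.
Proof. intros H. exact (rsum_sq_terms_le x 0 H). Qed.

Lemma nsq_le_l2sq x lo hi : in_l2 x -> nsq lo hi x <= l2sq x.
Proof.
  intros H. destruct (Z_le_gt_dec hi lo).
  - unfold nsq. rewrite zsum_empty by lia. apply l2sq_nonneg; auto.
  - set (n := Z.to_nat (Z.max (Z.abs lo) (Z.abs hi))).
    eapply Rle_trans; [| apply (rsum_sq_terms_le x n H)]. rewrite rsum_sq_terms.
    apply zsum_le_widen; try lia. intros; apply pow2_ge_0.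
Qed.

Lemma l2_of_nsq_bound x B : (forall lo hi, nsq lo hi x <= B) -> in_l2 x /\ l2sq x <= B.
Proof. intros H. apply l2_of_rsum_bound. intros n. rewrite rsum_sq_terms. apply H. Qed.

Lemma l2norm_nonneg x : 0 <= l2norm x.
Proof. apply sqrt_pos. Qed.

Lemma l2norm_sq x : in_l2 x -> l2norm x ^ 2 = l2sq x.
Proof. intros H. apply pow2_sqrt, l2sq_nonneg, H. Qed.

Lemma sqrt_nsq_le_l2norm x lo hi : in_l2 x -> sqrt (nsq lo hi x) <= l2norm x.
Proof. intros H. apply sqrt_le_1_alt, nsq_le_l2sq, H. Qed.

Lemma l2_of_sqrt_nsq_bound x C : (forall lo hi, sqrt (nsq lo hi x) <= C) -> in_l2 x /\ l2norm x <= C.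
Proof.
  intros H.
  assert (HC : 0 <= C) by (pose proof (H 0%Z 0%Z); pose proof (sqrt_pos (nsq 0 0 x)); lra).
  destruct (l2_of_nsq_bound x (C ^ 2)) as [H1 H2].
  { intros lo hi. rewrite <- (pow2_sqrt (nsq lo hi x)) by apply nsq_nonneg.
    apply pow_incr. split. apply sqrt_pos. apply H. }
  split; auto. unfold l2norm. rewrite <- (sqrt_pow2 C) by auto. apply sqrt_le_1_alt; auto.
Qed.

Definition supp_in (x : seqZ) lo hi := forall i, (i < lo \/ hi <= i)%Z -> x i = 0%C.

Lemma nsq_le_supp x lo hi l h : supp_in x lo hi -> (lo <= hi)%Z -> nsq l h x <= nsq lo hi x.
Proof.
  intros Hs Hlh. unfold nsq. destruct (Z_le_gt_dec h l).
  - rewrite zsum_empty by lia. apply nsq_nonneg.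
  - eapply Rle_trans.
    + apply (zsum_le_widen (Z.min l lo) (Z.max h hi)); try lia. intros; apply pow2_ge_0.
    + rewrite (zsum_restrict (Z.min l lo) (Z.max h hi) lo hi); try lia; [lra |].
      intros i _ Hi. rewrite Hs by lia. rewrite Cmod_0. ring.
Qed.

Lemma supp_l2 x lo hi : supp_in x lo hi -> (lo <= hi)%Z -> in_l2 x /\ l2sq x = nsq lo hi x.
Proof.
  intros Hs Hlh. destruct (l2_of_nsq_bound x (nsq lo hi x)) as [H1 H2].
  - intros; apply nsq_le_supp; auto.
  - split; auto. apply Rle_antisym; auto. apply nsq_le_l2sq; auto.
Qed.

Lemma l2_vzero_eq (x : seqZ) : (forall i, x i = 0%C) -> in_l2 x /\ l2norm x = 0.
Proof.
  intros H. destruct (supp_l2 x 0 0) as [H1 H2]; [intros i _; auto | lia |].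
  split; auto. unfold l2norm. fold (l2sq x). rewrite H2. unfold nsq.
  rewrite zsum_empty by lia. apply sqrt_0.
Qed.

Lemma l2_vadd x y : in_l2 x -> in_l2 y -> in_l2 (vadd x y) /\ l2norm (vadd x y) <= l2norm x + l2norm y.
Proof.
  intros Hx Hy. apply l2_of_sqrt_nsq_bound. intros lo hi. eapply Rle_trans. apply nsq_minkowski.
  pose proof (sqrt_nsq_le_l2norm x lo hi Hx). pose proof (sqrt_nsq_le_l2norm y lo hi Hy). lra.
Qed.

Lemma l2_vscal c x : in_l2 x -> in_l2 (vscal c x) /\ l2norm (vscal c x) = Cmod c * l2norm x.
Proof.
  intros Hx.
  assert (E : sq_terms (vscal c x) = fun n => Cmod c ^ 2 * sq_terms x n).
  { apply functional_extensionality. intros n. unfold sq_terms, vscal. rewrite !Cmod_mult. ring. }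
  split.
  - apply (l2_of_rsum_bound _ (Cmod c ^ 2 * l2sq x)). intros n. rewrite E, rsum_scal.
    apply Rmult_le_compat_l. apply pow2_ge_0. apply rsum_sq_terms_le; auto.
  - unfold l2norm. rewrite E, Series_scal_l, sqrt_mult, sqrt_pow2; auto.
    apply Cmod_ge_0. apply pow2_ge_0. apply l2sq_nonneg; auto.
Qed.

Lemma l2_vsub x y : in_l2 x -> in_l2 y -> in_l2 (vsub x y) /\ l2norm (vsub x y) <= l2norm x + l2norm y.
Proof.
  intros Hx Hy.
  replace (vsub x y) with (vadd x (vscal (-1) y))
    by (apply functional_extensionality; intros i; unfold vsub, vadd, vscal; ring).
  destruct (l2_vscal (-1) y Hy) as [H1 H2]. destruct (l2_vadd x _ Hx H1) as [H3 H4].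
  replace (Cmod (-1)) with 1 in H2 by (rewrite Cmod_R, Rabs_left by lra; lra).
  split; auto. lra.
Qed.

Lemma Cmod_le_l2norm x i : in_l2 x -> Cmod (x i) <= l2norm x.
Proof.
  intros H. eapply Rle_trans; [| apply (sqrt_nsq_le_l2norm x i (i + 1)); auto].
  unfold nsq. rewrite zsum1, sqrt_pow2. lra. apply Cmod_ge_0.
Qed.

Lemma l2norm_eq0 x : in_l2 x -> l2norm x = 0 -> forall i, x i = 0%C.
Proof.
  intros H H0 i. apply Cmod_eq_0.
  pose proof (Cmod_le_l2norm x i H). pose proof (Cmod_ge_0 (x i)). lra.
Qed.

Definition trunc lo hi (x : seqZ) : seqZ :=
  fun i => if andb (Z.leb lo i) (Z.ltb i hi) then x i else 0%C.

Lemma trunc_supp lo hi x : supp_in (trunc lo hi x) lo hi.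
Proof. intros i Hi. unfold trunc. destruct (Z.leb_spec lo i), (Z.ltb_spec i hi); simpl; auto; lia. Qed.

Lemma trunc_in lo hi x i : (lo <= i < hi)%Z -> trunc lo hi x i = x i.
Proof. intros Hi. unfold trunc. destruct (Z.leb_spec lo i), (Z.ltb_spec i hi); simpl; auto; lia. Qed.

Lemma trunc_l2 lo hi x : (lo <= hi)%Z -> in_l2 (trunc lo hi x) /\ l2sq (trunc lo hi x) = nsq lo hi x.
Proof.
  intros H. destruct (supp_l2 (trunc lo hi x) lo hi (trunc_supp lo hi x) H) as [H1 H2].
  split; auto. rewrite H2. apply zsum_ext. intros. rewrite trunc_in; auto.
Qed.

Lemma l2norm_trunc_le lo hi x : (lo <= hi)%Z -> in_l2 x -> l2norm (trunc lo hi x) <= l2norm x.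
Proof.
  intros H Hx. unfold l2norm. fold (l2sq (trunc lo hi x)).
  rewrite (proj2 (trunc_l2 lo hi x H)). apply sqrt_nsq_le_l2norm; auto.
Qed.

Lemma l2norm_vscal_R (c : R) x : 0 <= c -> in_l2 x -> l2norm (vscal c x) = c * l2norm x.
Proof. intros Hc Hx. rewrite (proj2 (l2_vscal c x Hx)), Cmod_R, Rabs_pos_eq; auto. Qed.

Lemma l2norm_normalize x : in_l2 x -> 0 < l2norm x -> l2norm (vscal (RtoC (/ l2norm x)) x) = 1.
Proof.
  intros Hx Hn. rewrite l2norm_vscal_R; auto. field. lra.
  left. apply Rinv_0_lt_compat; auto.
Qed.

Lemma bapply_czsum a w x i :
  bapply a w x i = czsum (i - Z.of_nat w) (i + Z.of_nat w + 1) (fun j => (a i j * x j)%C).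
Proof.
  rewrite czsum_csum.
  replace (Z.to_nat (i + Z.of_nat w + 1 - (i - Z.of_nat w))) with (2 * w + 1)%nat by lia.
  reflexivity.
Qed.

Lemma bapply_supp a w x lo hi i : banded a w -> supp_in x lo hi ->
  bapply a w x i = czsum lo hi (fun j => (a i j * x j)%C).
Proof.
  intros Hb Hs. rewrite bapply_czsum.
  set (g := fun j => (a i j * x j)%C).
  assert (Hg : forall j, ((j < i - Z.of_nat w \/ i + Z.of_nat w + 1 <= j) \/ (j < lo \/ hi <= j))%Z ->
                 g j = 0%C).
  { intros j [Hj | Hj]; unfold g; [rewrite Hb by lia | rewrite Hs by lia]; ring. }
  set (l := Z.max (i - Z.of_nat w) lo). set (h := Z.min (i + Z.of_nat w + 1) hi).
  destruct (Z_le_gt_dec l h).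
  - rewrite (czsum_restrict (i - Z.of_nat w) _ l h g), (czsum_restrict lo hi l h g);
      try lia; auto; intros; apply Hg; lia.
  - rewrite !czsum_eq0; auto; intros; apply Hg; lia.
Qed.

Lemma bapply_supp_out a w x lo hi : banded a w -> supp_in x lo hi -> (lo <= hi)%Z ->
  supp_in (bapply a w x) (lo - Z.of_nat w) (hi + Z.of_nat w).
Proof.
  intros Hb Hs Hl i Hi. rewrite (bapply_supp a w x lo hi) by auto. apply czsum_eq0.
  intros j Hj. rewrite Hb by lia. ring.
Qed.

Lemma bapply_ext a w x y : (forall i, bapply a w x i = y i) -> bapply a w x = y.
Proof. intros H. apply functional_extensionality; auto. Qed.

Lemma bapply_vadd a w x y : bapply a w (vadd x y) = vadd (bapply a w x) (bapply a w y).
Proof.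
  apply functional_extensionality; intros i. unfold vadd at 2. rewrite !bapply_czsum, <- czsum_plus.
  apply czsum_ext. intros. unfold vadd. ring.
Qed.

Lemma bapply_vscal a w c x : bapply a w (vscal c x) = vscal c (bapply a w x).
Proof.
  apply functional_extensionality; intros i. unfold vscal at 2. rewrite !bapply_czsum, <- czsum_scal.
  apply czsum_ext. intros. unfold vscal. ring.
Qed.

Lemma bapply_vsub a w x y : bapply a w (vsub x y) = vsub (bapply a w x) (bapply a w y).
Proof.
  assert (E : forall u v, vsub u v = vadd u (vscal (-1) v))
    by (intros; apply functional_extensionality; intros i; unfold vsub, vadd, vscal; ring).
  rewrite !E, bapply_vadd, bapply_vscal. reflexivity.
Qed.

Lemma bapply_vzero a w : bapply a w vzero = vzero.
Proof.
  apply functional_extensionality; intros i. rewrite bapply_czsum.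
  apply czsum_eq0. intros. unfold vzero. ring.
Qed.

Lemma banded_adjmat a w : banded a w -> banded (adjmat a) w.
Proof. intros H i j Hij. unfold adjmat. rewrite H by lia. apply injective_projections; simpl; lra. Qed.

Lemma adjmat_involutive a : adjmat (adjmat a) = a.
Proof.
  apply functional_extensionality; intros i. apply functional_extensionality; intros j.
  apply Cconj_conj.
Qed.

Lemma ip_bapply_adjmat a w x z lx hx lz hz : banded a w -> supp_in x lx hx -> supp_in z lz hz ->
  ip lz hz (bapply a w x) z = ip lx hx x (bapply (adjmat a) w z).
Proof.
  intros Hb Hx Hz. unfold ip.
  rewrite (zsum_ext lz hz _ (fun i => zsum lx hx (fun j => dotC (x j) (Cconj (a i j) * z i)%C))).
  2:{ intros i _. rewrite (bapply_supp a w x lx hx), dotC_czsum by auto.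
      apply zsum_ext. intros; apply dotC_mult. }
  rewrite zsum_swap. apply zsum_ext. intros j _.
  rewrite (bapply_supp (adjmat a) w z lz hz) by (auto; apply banded_adjmat; auto).
  rewrite dotC_czsum_r. reflexivity.
Qed.

Lemma band_operator_bound a w : band_operator a w -> exists M, 0 < M /\
  forall x, in_l2 x -> in_l2 (bapply a w x) /\ l2norm (bapply a w x) <= M * l2norm x.
Proof.
  intros [_ [M HM]]. exists (Rmax M 1). split. pose proof (Rmax_r M 1). lra.
  intros x Hx. destruct (HM x Hx) as [H1 H2]. split; auto. eapply Rle_trans. apply H2.
  apply Rmult_le_compat_r. apply l2norm_nonneg. apply Rmax_l.
Qed.

Section AdjointBound.
Variables (a : matZ) (w : nat) (M : R).
Hypothesis Hb : banded a w.
Hypothesis HM0 : 0 < M.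
Hypothesis HM : forall x, in_l2 x -> in_l2 (bapply a w x) /\ l2norm (bapply a w x) <= M * l2norm x.

(* ||A^* z||^2 = <A A^* z, z> <= M ||A^* z|| ||z|| for finitely supported z. *)
Lemma adjmat_bound_supp z lo hi : supp_in z lo hi -> (lo <= hi)%Z ->
  l2norm (bapply (adjmat a) w z) <= M * l2norm z.
Proof.
  intros Hz Hlh. set (W := Z.of_nat w). set (u := bapply (adjmat a) w z).
  assert (Hu : supp_in u (lo - W) (hi + W)) by (apply bapply_supp_out; auto; apply banded_adjmat; auto).
  destruct (supp_l2 u (lo - W) (hi + W)) as [Hul Hun]; auto. lia.
  destruct (supp_l2 z lo hi) as [Hzl Hzn]; auto.
  set (s := nsq (lo - W) (hi + W) u).
  assert (Hus : l2norm u = sqrt s) by (unfold l2norm; fold (l2sq u); rewrite Hun; reflexivity).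
  assert (Hs : s <= M * sqrt s * l2norm z).
  { unfold s at 1. rewrite <- ip_self. unfold u at 2.
    rewrite <- (ip_bapply_adjmat a w u z _ _ lo hi) by auto.
    eapply Rle_trans. apply ip_cauchy_schwarz.
    apply Rmult_le_compat; try apply sqrt_pos.
    - eapply Rle_trans. apply sqrt_nsq_le_l2norm, HM; auto.
      rewrite <- Hus. apply HM; auto.
    - apply sqrt_nsq_le_l2norm; auto. }
  fold u. rewrite Hus. pose proof (nsq_nonneg (lo - W) (hi + W) u) as Hs0. fold s in Hs0.
  destruct (Req_dec s 0) as [E | E].
  { rewrite E, sqrt_0. apply Rmult_le_pos. lra. apply l2norm_nonneg. }
  assert (0 < sqrt s) by (apply sqrt_lt_R0; lra).
  apply (Rmult_le_reg_r (sqrt s)); auto. rewrite sqrt_sqrt by lra. lra.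
Qed.

Lemma adjmat_bound z : in_l2 z ->
  in_l2 (bapply (adjmat a) w z) /\ l2norm (bapply (adjmat a) w z) <= M * l2norm z.
Proof.
  intros Hz. apply l2_of_sqrt_nsq_bound. intros lo hi.
  destruct (Z_le_gt_dec hi lo).
  { unfold nsq. rewrite zsum_empty, sqrt_0 by lia. apply Rmult_le_pos. lra. apply l2norm_nonneg. }
  set (W := Z.of_nat w). set (T := trunc (lo - W) (hi + W) z).
  assert (E : nsq lo hi (bapply (adjmat a) w z) = nsq lo hi (bapply (adjmat a) w T)).
  { apply zsum_ext. intros i Hi. rewrite !bapply_czsum. do 2 f_equal.
    apply czsum_ext. intros j Hj. unfold T. rewrite trunc_in; auto. unfold W. lia. }
  rewrite E.
  assert (HT : supp_in (bapply (adjmat a) w T) (lo - W - W) (hi + W + W))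
    by (apply bapply_supp_out; [apply banded_adjmat | apply trunc_supp |]; auto; lia).
  eapply Rle_trans. apply sqrt_nsq_le_l2norm, (supp_l2 _ _ _ HT); lia.
  eapply Rle_trans. apply (adjmat_bound_supp T (lo - W) (hi + W)); [apply trunc_supp | lia].
  apply Rmult_le_compat_l; [lra |]. apply l2norm_trunc_le; auto. lia.
Qed.

End AdjointBound.

Lemma band_operator_adjmat a w : band_operator a w -> band_operator (adjmat a) w.
Proof.
  intros Hop. destruct (band_operator_bound a w Hop) as [M [HM0 HM]].
  split. apply banded_adjmat, Hop. exists M. apply (adjmat_bound a w M); auto. apply Hop.
Qed.

(** * The lower norms nu and nu_N *)

Lemma Glb_Rbar_nonneg_spec (E : R -> Prop) : (exists r, E r) -> (forall r, E r -> 0 <= r) ->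
  exists g, Glb_Rbar E = Finite g /\ 0 <= g /\ (forall r, E r -> g <= r) /\
    (forall c, (forall r, E r -> c <= r) -> c <= g).
Proof.
  intros [r0 Hr0] Hpos. destruct (Glb_Rbar_correct E) as [Hlb Hgr].
  destruct (Glb_Rbar E) as [g | |] eqn:Eg.
  - exists g. split; [reflexivity |]. split; [| split].
    + apply (Hgr (Finite 0)). intros r Hr. simpl. auto.
    + intros r Hr. exact (Hlb r Hr).
    + intros c Hc. apply (Hgr (Finite c)). intros r Hr. simpl. auto.
  - specialize (Hlb r0 Hr0). contradiction.
  - exfalso. apply (Hgr (Finite 0)). intros r Hr. simpl. auto.
Qed.

Lemma lower_bound_approx (E : R -> Prop) g : (forall c, (forall r, E r -> c <= r) -> c <= g) ->
  forall eps, 0 < eps -> exists r, E r /\ r < g + eps.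
Proof.
  intros H eps He. apply NNPP. intros Hno.
  assert (g + eps <= g); [| lra].
  apply H. intros r Hr. apply Rnot_lt_le. intros Hlt. apply Hno. eauto.
Qed.

Definition e0 : seqZ := fun i => if Z.eqb i 0 then 1%C else 0%C.

Lemma e0_supp : supp_in e0 0 1.
Proof. intros i Hi. unfold e0. destruct (Z.eqb_spec i 0); auto. lia. Qed.

Lemma e0_unit : in_l2 e0 /\ l2norm e0 = 1.
Proof.
  destruct (supp_l2 e0 0 1 e0_supp) as [H1 H2]; [lia |]. split; auto.
  unfold l2norm. fold (l2sq e0). rewrite H2. unfold nsq. rewrite (zsum1 0). unfold e0. simpl.
  rewrite Cmod_1, !Rmult_1_r. exact sqrt_1.
Qed.

Definition nuset a w := fun r => exists x : seqZ, in_l2 x /\ l2norm x = 1 /\ r = l2norm (bapply a w x).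

Lemma nu_spec a w : 0 <= nu a w /\
  (forall r, nuset a w r -> nu a w <= r) /\
  (forall c, (forall r, nuset a w r -> c <= r) -> c <= nu a w).
Proof.
  destruct (Glb_Rbar_nonneg_spec (nuset a w)) as [g [E H]].
  - exists (l2norm (bapply a w e0)), e0. destruct e0_unit. auto.
  - intros r [x [_ [_ ->]]]. apply l2norm_nonneg.
  - unfold nu. fold (nuset a w). rewrite E. exact H.
Qed.

Lemma nu_nonneg a w : 0 <= nu a w.
Proof. exact (proj1 (nu_spec a w)). Qed.

Lemma nu_approx a w eps : 0 < eps ->
  exists x, in_l2 x /\ l2norm x = 1 /\ l2norm (bapply a w x) < nu a w + eps.
Proof.
  intros He. destruct (nu_spec a w) as [_ [_ H]].
  destruct (lower_bound_approx _ _ H eps He) as [r [[x [Hx [Hn ->]]] Hr]]. eauto.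
Qed.

Lemma nu_le a w x : band_operator a w -> in_l2 x -> nu a w * l2norm x <= l2norm (bapply a w x).
Proof.
  intros Hop Hx. destruct (nu_spec a w) as [_ [Hlb _]].
  pose proof (l2norm_nonneg x) as Hn.
  destruct (Req_dec (l2norm x) 0) as [E | E].
  { rewrite E, Rmult_0_r. apply l2norm_nonneg. }
  destruct (band_operator_bound a w Hop) as [M [_ HM]].
  set (c := / l2norm x). assert (Hc : 0 <= c) by (left; apply Rinv_0_lt_compat; lra).
  assert (Hu := Hlb _ (ex_intro _ (vscal c x)
                         (conj (proj1 (l2_vscal c x Hx)) (conj (l2norm_normalize x Hx ltac:(lra)) eq_refl)))).
  rewrite bapply_vscal, l2norm_vscal_R in Hu by (auto; apply HM; auto).
  apply (Rmult_le_reg_r c). unfold c; apply Rinv_0_lt_compat; lra.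
  replace (nu a w * l2norm x * c) with (nu a w) by (unfold c; field; auto). lra.
Qed.

Definition nuNset a w (N : nat) := fun r => exists x : seqZ,
  in_l2 x /\ l2norm x = 1 /\
  (forall i j : Z, x i <> 0%C -> x j <> 0%C -> (Z.abs (i - j) < Z.of_nat N)%Z) /\
  r = l2norm (bapply a w x).

(* For [N = 0] the set is empty and [nuN a w 0] is the junk value [0]. *)
Lemma nuN_spec a w N : (1 <= N)%nat ->
  (forall r, nuNset a w N r -> nuN a w N <= r) /\
  (forall c, (forall r, nuNset a w N r -> c <= r) -> c <= nuN a w N).
Proof.
  intros HN. destruct (Glb_Rbar_nonneg_spec (nuNset a w N)) as [g [E [_ H]]].
  - exists (l2norm (bapply a w e0)), e0. destruct e0_unit. repeat split; auto.
    intros i j Hi Hj. unfold e0 in Hi, Hj.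
    destruct (Z.eqb_spec i 0), (Z.eqb_spec j 0); try tauto. lia.
  - intros r [x [_ [_ [_ ->]]]]. apply l2norm_nonneg.
  - unfold nuN. fold (nuNset a w N). rewrite E. exact H.
Qed.

Lemma nu_le_nuN a w N : (1 <= N)%nat -> nu a w <= nuN a w N.
Proof.
  intros HN. apply (nuN_spec a w N HN). intros r [x [H1 [H2 [_ ->]]]].
  apply (nu_spec a w). exists x. auto.
Qed.

Lemma nuN_succ_le a w N : (1 <= N)%nat -> nuN a w (S N) <= nuN a w N.
Proof.
  intros HN. apply (nuN_spec a w N HN). intros r [x [H1 [H2 [H4 ->]]]].
  apply (nuN_spec a w (S N)); [lia |]. exists x. repeat split; auto.
  intros i j Hi Hj. specialize (H4 i j Hi Hj). lia.
Qed.

Lemma nuN_antitone a w N N' : (1 <= N)%nat -> (N <= N')%nat -> nuN a w N' <= nuN a w N.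
Proof. intros H1 H2. induction H2; [lra |]. pose proof (nuN_succ_le a w m ltac:(lia)). lra. Qed.

Lemma nuN_le_supp a w n v : (1 <= n)%nat -> supp_in v (- Z.of_nat n) (Z.of_nat n) ->
  in_l2 v -> l2norm v = 1 -> nuN a w (2 * n) <= l2norm (bapply a w v).
Proof.
  intros Hn Hs Hv Hv1. apply (nuN_spec a w (2 * n)); [lia |]. exists v. repeat split; auto.
  intros i j Hi Hj.
  assert (Hin : forall k, v k <> 0%C -> (- Z.of_nat n <= k < Z.of_nat n)%Z).
  { intros k Hk. destruct (Z_lt_le_dec k (- Z.of_nat n)), (Z_lt_le_dec k (Z.of_nat n));
      try lia; exfalso; apply Hk, Hs; lia. }
  pose proof (Hin i Hi). pose proof (Hin j Hj). lia.
Qed.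

(** * Finitely supported approximations *)

Lemma l2sq_trunc_tail x n : in_l2 x ->
  in_l2 (vsub x (trunc (- Z.of_nat n) (Z.of_nat n) x)) /\
  l2sq (vsub x (trunc (- Z.of_nat n) (Z.of_nat n) x)) <= l2sq x - nsq (- Z.of_nat n) (Z.of_nat n) x.
Proof.
  intros Hx. set (m := Z.of_nat n). set (y := vsub x (trunc (- m) m x)).
  apply l2_of_nsq_bound. intros lo hi.
  destruct (Z_le_gt_dec hi lo).
  { unfold nsq at 1. rewrite zsum_empty by lia. pose proof (nsq_le_l2sq x (- m) m Hx). lra. }
  set (L := Z.max (Z.max (Z.abs lo) (Z.abs hi)) m).
  eapply Rle_trans. apply (zsum_le_widen (- L) L); try lia. intros; apply pow2_ge_0.
  assert (E : nsq (- L) L y = nsq (- L) L x - nsq (- m) m x).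
  { unfold nsq. rewrite (zsum_split (- L) (- m) L), (zsum_split (- m) m L) by lia.
    rewrite (zsum_split (- L) (- m) L (fun i => Cmod (x i) ^ 2)) by lia.
    rewrite (zsum_split (- m) m L (fun i => Cmod (x i) ^ 2)) by lia.
    rewrite (zsum_eq0 (- m) m).
    2:{ intros i Hi. unfold y, vsub. rewrite trunc_in by lia.
        replace (x i - x i)%C with (RtoC 0) by ring. rewrite Cmod_0. ring. }
    rewrite (zsum_ext (- L) (- m) (fun i => Cmod (y i) ^ 2) (fun i => Cmod (x i) ^ 2)).
    rewrite (zsum_ext m L (fun i => Cmod (y i) ^ 2) (fun i => Cmod (x i) ^ 2)). ring.
    all: intros i Hi; unfold y, vsub; rewrite (trunc_supp (- m) m x) by lia; do 2 f_equal; ring. }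
  fold (nsq (- L) L y). rewrite E. pose proof (nsq_le_l2sq x (- L) L Hx). lra.
Qed.

Lemma trunc_cvg x d : in_l2 x -> 0 < d -> exists N, forall n : nat, (N <= n)%nat ->
  in_l2 (vsub x (trunc (- Z.of_nat n) (Z.of_nat n) x)) /\
  l2norm (vsub x (trunc (- Z.of_nat n) (Z.of_nat n) x)) <= d.
Proof.
  intros Hx Hd. pose proof (l2_partial_sums_lim x Hx) as Hlim. apply is_lim_seq_spec in Hlim.
  destruct (Hlim (mkposreal (d ^ 2) ltac:(apply pow_lt; lra))) as [N HN].
  exists N. intros n Hn. specialize (HN n Hn). simpl in HN. rewrite rsum_sq_terms in HN.
  destruct (l2sq_trunc_tail x n Hx) as [Hy Hy2]. split; auto.
  unfold l2norm. fold (l2sq (vsub x (trunc (- Z.of_nat n) (Z.of_nat n) x))).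
  rewrite <- (sqrt_pow2 d) by lra. apply sqrt_le_1_alt. apply Rabs_def2 in HN. lra.
Qed.

Lemma nu_approx_supp a w eps : band_operator a w -> 0 < eps ->
  exists n : nat, (1 <= n)%nat /\ exists v, supp_in v (- Z.of_nat n) (Z.of_nat n) /\
    in_l2 v /\ l2norm v = 1 /\ l2norm (bapply a w v) <= nu a w + eps.
Proof.
  intros Hop He.
  destruct (nu_approx a w (eps / 2) ltac:(lra)) as [x [Hx [Hx1 HAx]]].
  destruct (band_operator_bound a w Hop) as [M [HM0 HM]].
  set (c := l2norm (bapply a w x)) in HAx. assert (Hc : 0 <= c) by apply l2norm_nonneg.
  (* [d] is chosen so that [(c + M d) / (1 - d) <= c + eps / 2]. *)
  set (d := (eps / 2) / (M + c + eps / 2)).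
  assert (Hd : 0 < d) by (apply Rdiv_lt_0_compat; lra).
  assert (Hdd : d * (M + c + eps / 2) = eps / 2) by (unfold d; field; lra).
  assert (Hd1 : d < 1) by nra.
  destruct (trunc_cvg x d Hx Hd) as [N HN].
  set (n := S N). exists n. split; [unfold n; lia |].
  destruct (HN n ltac:(unfold n; lia)) as [Hy Hyn].
  set (m := Z.of_nat n) in *. set (T := trunc (- m) m x) in *.
  destruct (trunc_l2 (- m) m x) as [HT _]; [unfold m; lia |]. fold T in HT.
  assert (HTn : 1 - d <= l2norm T).
  { replace x with (vadd T (vsub x T)) in Hx1
      by (apply functional_extensionality; intros i; unfold vadd, vsub; ring).
    pose proof (proj2 (l2_vadd T (vsub x T) HT Hy)). lra. }
  assert (HAT : l2norm (bapply a w T) <= c + M * d).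
  { replace T with (vsub x (vsub x T))
      by (apply functional_extensionality; intros i; unfold vsub; ring).
    rewrite bapply_vsub. eapply Rle_trans. apply l2_vsub; apply HM; auto.
    pose proof (proj2 (HM _ Hy)). assert (M * l2norm (vsub x T) <= M * d) by (apply Rmult_le_compat_l; lra).
    fold c. lra. }
  assert (HTpos : 0 < l2norm T) by nra.
  set (k := / l2norm T). assert (Hk : 0 < k) by (apply Rinv_0_lt_compat; lra).
  exists (vscal k T). split; [| split; [| split]].
  - intros i Hi. unfold vscal. rewrite (trunc_supp (- m) m x) by lia. ring.
  - apply l2_vscal; auto.
  - apply l2norm_normalize; auto.
  - rewrite bapply_vscal, l2norm_vscal_R by (try lra; apply HM; auto).
    apply (Rmult_le_reg_l (l2norm T)); auto. unfold k. rewrite <- Rmult_assoc, Rinv_r, Rmult_1_l by lra.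
    assert (c + M * d <= (c + eps / 2) * (1 - d)) by nra.
    assert ((c + eps / 2) * (1 - d) <= (nu a w + eps) * l2norm T) by (apply Rmult_le_compat; lra).
    lra.
Qed.

Lemma nuN_cvg a w : band_operator a w -> is_lim_seq (fun N => nuN a w N) (nu a w).
Proof.
  intros Hop. apply is_lim_seq_spec. intros [eps He]. simpl.
  destruct (nu_approx_supp a w (eps / 2) Hop ltac:(lra)) as [n [Hn [v [Hs [Hv [Hv1 HAv]]]]]].
  exists (2 * n)%nat. intros N HN.
  pose proof (nuN_le_supp a w n v Hn Hs Hv Hv1).
  pose proof (nuN_antitone a w (2 * n) N ltac:(lia) HN).
  pose proof (nu_le_nuN a w N ltac:(lia)).
  apply Rabs_def1; lra.
Qed.

(** * Completeness of l^2 along geometric Cauchy sequences *)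

Lemma pow_lt_eventually q eps : 0 <= q < 1 -> 0 < eps ->
  exists N, forall n, (N <= n)%nat -> q ^ n < eps.
Proof.
  intros Hq He. destruct (pow_lt_1_zero q ltac:(rewrite Rabs_right; lra) eps He) as [N HN].
  exists N. intros n Hn. specialize (HN n Hn). rewrite Rabs_right in HN; auto. apply Rle_ge, pow_le; lra.
Qed.

Lemma le_of_le_plus_pow q a b C k : 0 <= q < 1 ->
  (forall K, (k <= K)%nat -> a <= b + C * q ^ K) -> a <= b.
Proof.
  intros Hq H. apply Rnot_lt_le. intros Hab. pose proof (Rabs_pos C).
  destruct (pow_lt_eventually q ((a - b) / (Rabs C + 1)) Hq) as [N HN].
  { apply Rdiv_lt_0_compat; lra. }
  specialize (HN (max N k) ltac:(lia)). specialize (H (max N k) ltac:(lia)).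
  set (p := q ^ max N k) in *. assert (0 <= p) by (apply pow_le; lra).
  assert (C * p <= Rabs C * p) by (apply Rmult_le_compat_r; auto; apply Rle_abs).
  assert (p * (Rabs C + 1) < a - b).
  { apply (Rmult_lt_compat_r (Rabs C + 1)) in HN; [| lra].
    unfold Rdiv in HN. rewrite Rmult_assoc, Rinv_l in HN; lra. }
  nra.
Qed.

Lemma cauchy_bound_lim (u : nat -> R) (D : nat -> R) :
  (forall eps, 0 < eps -> exists N, forall n, (N <= n)%nat -> D n < eps) ->
  (forall k l, (k <= l)%nat -> Rabs (u l - u k) <= D k) ->
  exists L, forall k, Rabs (L - u k) <= D k.
Proof.
  intros HD Hu.
  assert (Hcv : ex_finite_lim_seq u).
  { apply ex_lim_seq_cauchy_corr. intros [eps He].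
    destruct (HD eps He) as [N HN]. exists N. intros n m Hn Hm. simpl.
    destruct (le_ge_dec n m).
    - rewrite <- Rabs_Ropp, Ropp_minus_distr. eapply Rle_lt_trans; [apply Hu | apply HN]; auto.
    - eapply Rle_lt_trans; [apply Hu | apply HN]; auto. }
  destruct Hcv as [L HL]. exists L. intros k. apply Rabs_le. split.
  - assert (H : Rbar_le (u k - D k) L).
    { apply (is_lim_seq_le_loc (fun _ => u k - D k) u); [| apply is_lim_seq_const | exact HL].
      exists k. intros n Hn. specialize (Hu k n Hn). apply Rabs_le_between in Hu. lra. }
    simpl in H. lra.
  - assert (H : Rbar_le L (u k + D k)).
    { apply (is_lim_seq_le_loc u (fun _ => u k + D k)); [| exact HL | apply is_lim_seq_const].
      exists k. intros n Hn. specialize (Hu k n Hn). apply Rabs_le_between in Hu. lra. }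
    simpl in H. lra.
Qed.

Lemma cauchy_bound_lim_C (z : nat -> C) (D : nat -> R) :
  (forall eps, 0 < eps -> exists N, forall n, (N <= n)%nat -> D n < eps) ->
  (forall k l, (k <= l)%nat -> Cmod (z l - z k)%C <= D k) ->
  exists L, forall k, Cmod (L - z k)%C <= 2 * D k.
Proof.
  intros HD Hz.
  destruct (cauchy_bound_lim (fun k => fst (z k)) D HD) as [L1 H1].
  { intros k l Hkl. eapply Rle_trans; [| apply (Hz k l Hkl)]. apply (re_le_Cmod (z l - z k)). }
  destruct (cauchy_bound_lim (fun k => snd (z k)) D HD) as [L2 H2].
  { intros k l Hkl. eapply Rle_trans; [| apply (Hz k l Hkl)].
    replace (snd (z l) - snd (z k)) with (snd (z l - z k)%C) by (simpl; ring).
    pose proof (Rmax_Cmod (z l - z k)%C).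
    pose proof (Rmax_r (Rabs (fst (z l - z k)%C)) (Rabs (snd (z l - z k)%C))).
    lra. }
  exists (L1, L2). intros k. eapply Rle_trans. apply Cmod_le_Rabs_fst_snd.
  specialize (H1 k). specialize (H2 k). simpl. unfold Rminus in H1, H2. lra.
Qed.

Section GeometricCauchy.
Variables (xs : nat -> seqZ) (c q : R).
Hypothesis Hq : 0 <= q < 1.
Hypothesis Hc : 0 <= c.
Hypothesis Hl2 : forall k, in_l2 (xs k).
Hypothesis Hstep : forall k, l2norm (vsub (xs (S k)) (xs k)) <= c * q ^ k.

Let tail k := c / (1 - q) * q ^ k.

Lemma tail_nonneg k : 0 <= tail k.
Proof. apply Rmult_le_pos. apply Rdiv_le_0_compat; lra. apply pow_le; lra. Qed.

Lemma tail_lt_eventually eps : 0 < eps -> exists N, forall n, (N <= n)%nat -> tail n < eps.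
Proof.
  intros He. destruct (Req_dec c 0) as [E | E].
  { exists O. intros. unfold tail. rewrite E. unfold Rdiv. rewrite !Rmult_0_l. auto. }
  assert (Hcq : 0 < c / (1 - q)) by (apply Rdiv_lt_0_compat; lra).
  destruct (pow_lt_eventually q (eps / (c / (1 - q))) Hq) as [N HN].
  { apply Rdiv_lt_0_compat; lra. }
  exists N. intros n Hn. specialize (HN n Hn). unfold tail.
  apply (Rmult_lt_compat_l (c / (1 - q))) in HN; auto.
  replace (c / (1 - q) * (eps / (c / (1 - q)))) with eps in HN by (field; lra). auto.
Qed.

Lemma geom_telescope k l : (k <= l)%nat ->
  in_l2 (vsub (xs l) (xs k)) /\ l2norm (vsub (xs l) (xs k)) <= c * (q ^ k - q ^ l) / (1 - q).
Proof.
  intros Hkl. induction Hkl as [| m Hkm [IH1 IH2]].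
  - destruct (l2_vzero_eq (vsub (xs k) (xs k))) as [H1 H2]; [intros i; unfold vsub; ring |].
    rewrite H2. split; auto. right. field. lra.
  - replace (vsub (xs (S m)) (xs k)) with (vadd (vsub (xs (S m)) (xs m)) (vsub (xs m) (xs k)))
      by (apply functional_extensionality; intros i; unfold vsub, vadd; ring).
    destruct (l2_vsub (xs (S m)) (xs m)) as [H3 _]; auto.
    destruct (l2_vadd _ _ H3 IH1) as [H5 H6]. split; auto. eapply Rle_trans. apply H6.
    pose proof (Hstep m). simpl pow.
    replace (c * (q ^ k - q * q ^ m) / (1 - q)) with (c * q ^ m + c * (q ^ k - q ^ m) / (1 - q))
      by (field; lra).
    lra.
Qed.

Lemma geom_telescope_tail k l : (k <= l)%nat -> l2norm (vsub (xs l) (xs k)) <= tail k.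
Proof.
  intros Hkl. eapply Rle_trans. apply geom_telescope; auto. unfold tail.
  replace (c * (q ^ k - q ^ l) / (1 - q)) with (c / (1 - q) * (q ^ k - q ^ l)) by (field; lra).
  apply Rmult_le_compat_l. apply Rdiv_le_0_compat; lra.
  assert (0 <= q ^ l) by (apply pow_le; lra). lra.
Qed.

(* The limit is first built pointwise; [l2norm (x - xs k) <= tail k] then holds on every
   window, up to the error [sqrt (hi - lo) * 2 tail K] that vanishes as [K -> oo]. *)
Lemma geom_cauchy_lim : exists x, in_l2 x /\
  forall k, in_l2 (vsub x (xs k)) /\ l2norm (vsub x (xs k)) <= c / (1 - q) * q ^ k.
Proof.
  assert (Hpt : forall i, exists L, forall k, Cmod (L - xs k i)%C <= 2 * tail k).
  { intros i. apply cauchy_bound_lim_C. apply tail_lt_eventually.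
    intros k l Hkl. eapply Rle_trans; [| apply (geom_telescope_tail k l Hkl)].
    apply (Cmod_le_l2norm (vsub (xs l) (xs k)) i), geom_telescope; auto. }
  destruct (choice _ Hpt) as [x Hx].
  assert (Hw : forall k, in_l2 (vsub x (xs k)) /\ l2norm (vsub x (xs k)) <= tail k).
  { intros k. apply l2_of_sqrt_nsq_bound. intros lo hi.
    apply (le_of_le_plus_pow q _ _ (2 * (c / (1 - q)) * sqrt (INR (Z.to_nat (hi - lo)))) k Hq).
    intros K HK.
    replace (vsub x (xs k)) with (vadd (vsub x (xs K)) (vsub (xs K) (xs k)))
      by (apply functional_extensionality; intros i; unfold vsub, vadd; ring).
    eapply Rle_trans. apply nsq_minkowski.
    assert (H1 : sqrt (nsq lo hi (vsub (xs K) (xs k))) <= tail k).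
    { eapply Rle_trans. apply sqrt_nsq_le_l2norm, geom_telescope; auto. apply geom_telescope_tail; auto. }
    assert (H2 : nsq lo hi (vsub x (xs K)) <= INR (Z.to_nat (hi - lo)) * (2 * tail K) ^ 2).
    { unfold nsq, zsum. rewrite <- rsum_const. apply rsum_le. intros t _.
      apply pow_incr. split. apply Cmod_ge_0. apply Hx. }
    apply sqrt_le_1_alt in H2. rewrite sqrt_mult, sqrt_pow2 in H2 by (try apply pos_INR; try apply pow2_ge_0;
      pose proof (tail_nonneg K); lra).
    unfold tail in H2. lra. }
  exists x. split.
  - replace x with (vadd (vsub x (xs O)) (xs O))
      by (apply functional_extensionality; intros i; unfold vsub, vadd; ring).
    apply l2_vadd; auto. apply Hw.
  - exact Hw.
Qed.

End GeometricCauchy.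

(** * Surjectivity from a lower bound on the adjoint *)

Definition landweber a w (t : R) (r : seqZ) : seqZ :=
  vsub r (vscal t (bapply a w (bapply (adjmat a) w r))).

Lemma landweber_vadd a w t x y :
  landweber a w t (vadd x y) = vadd (landweber a w t x) (landweber a w t y).
Proof.
  unfold landweber. rewrite !bapply_vadd.
  apply functional_extensionality; intros i. unfold vsub, vadd, vscal. ring.
Qed.

Section Contraction.
Variables (a : matZ) (w : nat) (M M' mu : R).
Hypothesis Hb : banded a w.
Hypothesis HM0 : 0 < M.
Hypothesis HM : forall x, in_l2 x -> in_l2 (bapply a w x) /\ l2norm (bapply a w x) <= M * l2norm x.
Hypothesis HM'0 : 0 < M'.
Hypothesis HM' : forall x, in_l2 x ->
  in_l2 (bapply (adjmat a) w x) /\ l2norm (bapply (adjmat a) w x) <= M' * l2norm x.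
Hypothesis Hmu0 : 0 <= mu.
Hypothesis HmuM : mu <= M.
Hypothesis Hmu : forall z, in_l2 z -> mu * l2norm z <= l2norm (bapply (adjmat a) w z).

Let t := / M ^ 2.

Lemma contraction_ratio_bounds : 0 <= 1 - mu ^ 2 / M ^ 2 <= 1.
Proof.
  assert (mu ^ 2 <= M ^ 2) by (apply pow_incr; lra).
  assert (0 <= mu ^ 2 / M ^ 2 <= 1); [| lra].
  split. apply Rdiv_le_0_compat; [apply pow2_ge_0 | apply pow_lt; auto].
  apply (Rmult_le_reg_r (M ^ 2)). apply pow_lt; auto.
  unfold Rdiv. rewrite Rmult_assoc, Rinv_l by (apply pow_nonzero; lra). lra.
Qed.

(* With u = A^* r: ||r - t A u||^2 = ||r||^2 - 2t ||u||^2 + t^2 ||A u||^2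
   <= ||r||^2 - t ||u||^2 <= (1 - t mu^2) ||r||^2. *)
Lemma landweber_contract_supp r lo hi : supp_in r lo hi -> (lo <= hi)%Z ->
  in_l2 (landweber a w t r) /\ l2sq (landweber a w t r) <= (1 - mu ^ 2 / M ^ 2) * l2sq r.
Proof.
  intros Hs Hlh. set (W := Z.of_nat w).
  set (u := bapply (adjmat a) w r). set (v := bapply a w u).
  assert (Hu : supp_in u (lo - W) (hi + W)) by (apply bapply_supp_out; auto; apply banded_adjmat; auto).
  assert (Hv : supp_in v (lo - W - W) (hi + W + W)) by (apply bapply_supp_out; auto; lia).
  assert (HL : supp_in (landweber a w t r) (lo - W - W) (hi + W + W)).
  { intros i Hi. unfold landweber. fold u v. unfold vsub, vscal. rewrite Hv, Hs by lia. ring. }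
  destruct (supp_l2 _ _ _ HL) as [HLl HLn]; [lia |]. split; auto. rewrite HLn.
  unfold landweber. fold u v. rewrite nsq_sub_scal.
  destruct (supp_l2 r lo hi Hs Hlh) as [Hrl Hrn].
  destruct (supp_l2 u _ _ Hu) as [Hul Hun]; [lia |].
  destruct (supp_l2 v _ _ Hv) as [Hvl Hvn]; [lia |].
  assert (E1 : nsq (lo - W - W) (hi + W + W) r = l2sq r).
  { rewrite Hrn. apply zsum_restrict; try lia. intros i _ Hi. rewrite Hs by lia. rewrite Cmod_0. ring. }
  assert (E2 : ip (lo - W - W) (hi + W + W) r v = l2sq u).
  { unfold ip. rewrite (zsum_restrict _ _ lo hi)
      by (try lia; intros i _ Hi; rewrite Hs by lia; unfold dotC; simpl; ring).
    rewrite (zsum_ext _ _ _ (fun i => dotC (v i) (r i))) by (intros; apply dotC_comm).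
    fold (ip lo hi v r). unfold v.
    rewrite (ip_bapply_adjmat a w u r (lo - W) (hi + W) lo hi), ip_self by auto. auto. }
  rewrite E1, E2, <- Hvn.
  assert (H1 : l2sq v <= M ^ 2 * l2sq u).
  { rewrite <- (l2norm_sq v), <- (l2norm_sq u), <- Rpow_mult_distr by auto. apply pow_incr.
    split. apply l2norm_nonneg. apply HM; auto. }
  assert (H2 : mu ^ 2 * l2sq r <= l2sq u).
  { rewrite <- (l2norm_sq r), <- (l2norm_sq u), <- Rpow_mult_distr by auto. apply pow_incr.
    split. apply Rmult_le_pos; auto. apply l2norm_nonneg. apply Hmu; auto. }
  assert (Ht0 : 0 < t) by (apply Rinv_0_lt_compat, pow_lt; auto).
  assert (HtM : t * M ^ 2 = 1) by (unfold t; field; lra).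
  assert (Ht : t ^ 2 * l2sq v <= t * l2sq u).
  { replace (t ^ 2 * l2sq v) with (t * (t * l2sq v)) by ring.
    apply Rmult_le_compat_l; [lra |].
    apply Rle_trans with (t * (M ^ 2 * l2sq u)). apply Rmult_le_compat_l; lra.
    right. rewrite <- Rmult_assoc, HtM. ring. }
  assert (t * (mu ^ 2 * l2sq r) <= t * l2sq u) by (apply Rmult_le_compat_l; lra).
  replace ((1 - mu ^ 2 / M ^ 2) * l2sq r) with (l2sq r - t * (mu ^ 2 * l2sq r)) by (unfold t; field; lra).
  lra.
Qed.

Lemma landweber_bound r : in_l2 r ->
  in_l2 (landweber a w t r) /\ l2norm (landweber a w t r) <= (1 + t * (M * M')) * l2norm r.
Proof.
  intros Hr. assert (0 < t) by (apply Rinv_0_lt_compat, pow_lt; auto).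
  destruct (HM' r Hr) as [H1 H2]. destruct (HM _ H1) as [H3 H4].
  destruct (l2_vsub r _ Hr (proj1 (l2_vscal t _ H3))) as [H7 H8]. split; auto.
  rewrite l2norm_vscal_R in H8 by (auto; lra).
  assert (t * l2norm (bapply a w (bapply (adjmat a) w r)) <= t * (M * (M' * l2norm r))).
  { apply Rmult_le_compat_l; [lra |]. eapply Rle_trans. apply H4. apply Rmult_le_compat_l; lra. }
  unfold landweber. lra.
Qed.

Lemma landweber_contract r : in_l2 r ->
  in_l2 (landweber a w t r) /\ l2norm (landweber a w t r) <= sqrt (1 - mu ^ 2 / M ^ 2) * l2norm r.
Proof.
  intros Hr. split; [apply landweber_bound; auto |].
  assert (0 < t) by (apply Rinv_0_lt_compat, pow_lt; auto). pose proof contraction_ratio_bounds.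
  set (L := 1 + t * (M * M')).
  apply (le_of_le_plus_pow (1 / 2) _ _ L O ltac:(lra)). intros K _.
  destruct (trunc_cvg r ((1 / 2) ^ K) Hr ltac:(apply pow_lt; lra)) as [N HN].
  destruct (HN N (le_n N)) as [Hd1 Hd2].
  set (T := trunc (- Z.of_nat N) (Z.of_nat N) r) in *.
  destruct (trunc_l2 (- Z.of_nat N) (Z.of_nat N) r) as [HT _]; [lia |]. fold T in HT.
  destruct (landweber_contract_supp T (- Z.of_nat N) (Z.of_nat N)) as [HLT HLT2]; [apply trunc_supp | lia |].
  assert (HLTn : l2norm (landweber a w t T) <= sqrt (1 - mu ^ 2 / M ^ 2) * l2norm r).
  { unfold l2norm at 1. fold (l2sq (landweber a w t T)). eapply Rle_trans. apply sqrt_le_1_alt, HLT2.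
    rewrite sqrt_mult by (try (apply l2sq_nonneg; exact HT); lra). apply Rmult_le_compat_l. apply sqrt_pos.
    apply l2norm_trunc_le; auto. lia. }
  destruct (landweber_bound _ Hd1) as [H1 H2].
  replace r with (vadd T (vsub r T)) at 1
    by (apply functional_extensionality; intros i; unfold vadd, vsub; ring).
  rewrite landweber_vadd. eapply Rle_trans. apply l2_vadd; auto.
  assert (L * l2norm (vsub r T) <= L * (1 / 2) ^ K).
  { apply Rmult_le_compat_l; auto. unfold L. pose proof (Rmult_lt_0_compat M M' HM0 HM'0). nra. }
  fold L in H2. lra.
Qed.

End Contraction.

Section LandweberIteration.
Variables (a : matZ) (w : nat) (t q M M' : R) (y : seqZ).
Hypothesis Ht : 0 < t.
Hypothesis Hq : 0 <= q < 1.
Hypothesis HM0 : 0 <= M.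
Hypothesis HM : forall x, in_l2 x -> in_l2 (bapply a w x) /\ l2norm (bapply a w x) <= M * l2norm x.
Hypothesis HM'0 : 0 <= M'.
Hypothesis HM' : forall x, in_l2 x ->
  in_l2 (bapply (adjmat a) w x) /\ l2norm (bapply (adjmat a) w x) <= M' * l2norm x.
Hypothesis Hcontr : forall r, in_l2 r ->
  in_l2 (landweber a w t r) /\ l2norm (landweber a w t r) <= q * l2norm r.
Hypothesis Hy : in_l2 y.

Fixpoint residual k : seqZ :=
  match k with O => y | S k' => landweber a w t (residual k') end.

Fixpoint approx k : seqZ :=
  match k with
  | O => vzero
  | S k' => vadd (approx k') (vscal t (bapply (adjmat a) w (residual k')))
  end.

Lemma residual_eq k : residual k = vsub y (bapply a w (approx k)).
Proof.
  induction k; simpl.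
  - rewrite bapply_vzero. apply functional_extensionality; intros i. unfold vsub, vzero. ring.
  - rewrite IHk. unfold landweber. rewrite <- IHk, bapply_vadd, bapply_vscal.
    apply functional_extensionality; intros i. unfold vsub, vadd, vscal. rewrite IHk. unfold vsub. ring.
Qed.

Lemma residual_bound k : in_l2 (residual k) /\ l2norm (residual k) <= q ^ k * l2norm y.
Proof.
  induction k as [| k [H1 H2]]; simpl; [split; auto; lra |].
  destruct (Hcontr _ H1) as [H3 H4]. split; auto.
  eapply Rle_trans. apply H4. rewrite Rmult_assoc. apply Rmult_le_compat_l; lra.
Qed.

Lemma approx_step k : vsub (approx (S k)) (approx k) = vscal t (bapply (adjmat a) w (residual k)).
Proof. apply functional_extensionality; intros i. simpl. unfold vsub, vadd, vscal. ring. Qed.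

Lemma approx_l2 k : in_l2 (approx k).
Proof.
  induction k; simpl.
  - apply l2_vzero_eq. reflexivity.
  - apply l2_vadd; auto. apply l2_vscal, HM', residual_bound.
Qed.

Lemma approx_step_bound k : l2norm (vsub (approx (S k)) (approx k)) <= t * M' * l2norm y * q ^ k.
Proof.
  rewrite approx_step. destruct (residual_bound k) as [H1 H2]. destruct (HM' _ H1) as [H3 H4].
  rewrite l2norm_vscal_R by (auto; lra).
  assert (M' * l2norm (residual k) <= M' * (q ^ k * l2norm y)) by (apply Rmult_le_compat_l; lra).
  replace (t * M' * l2norm y * q ^ k) with (t * (M' * (q ^ k * l2norm y))) by ring.
  apply Rmult_le_compat_l; lra.
Qed.

(* [A x - y = A (x - approx K) - residual K] for every [K], and both terms are
   geometrically small. *)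
Lemma landweber_preimage : exists x, in_l2 x /\ forall i, bapply a w x i = y i.
Proof.
  set (c := t * M' * l2norm y).
  assert (Hc : 0 <= c) by (unfold c; apply Rmult_le_pos; [nra | apply l2norm_nonneg]).
  destruct (geom_cauchy_lim approx c q Hq Hc approx_l2 approx_step_bound) as [x [Hx Hxk]].
  exists x. split; auto. intros i.
  assert (Hle : Cmod (bapply a w x i - y i)%C <= 0).
  { apply (le_of_le_plus_pow q _ _ (M * (c / (1 - q)) + l2norm y) O Hq). intros K _.
    replace (bapply a w x i - y i)%C with (bapply a w (vsub x (approx K)) i - residual K i)%C
      by (rewrite residual_eq, bapply_vsub; unfold vsub; ring).
    eapply Rle_trans. apply Cmod_triangle. rewrite Cmod_opp.
    destruct (Hxk K) as [H1 H2]. destruct (HM _ H1) as [H3 H4]. destruct (residual_bound K) as [H5 H6].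
    pose proof (Cmod_le_l2norm _ i H3). pose proof (Cmod_le_l2norm _ i H5).
    assert (M * l2norm (vsub x (approx K)) <= M * (c / (1 - q) * q ^ K))
      by (apply Rmult_le_compat_l; auto).
    nra. }
  pose proof (Cmod_ge_0 (bapply a w x i - y i)%C).
  assert (E : (bapply a w x i - y i)%C = 0%C) by (apply Cmod_eq_0; lra).
  replace (bapply a w x i) with ((bapply a w x i - y i) + y i)%C by ring. rewrite E. ring.
Qed.

End LandweberIteration.

Lemma band_surjective a w : band_operator a w -> 0 < nu (adjmat a) w ->
  forall y, in_l2 y -> exists x, in_l2 x /\ forall i, bapply a w x i = y i.
Proof.
  intros Hop Hmu y Hy.
  destruct (band_operator_bound a w Hop) as [M0 [HM00 HM0]].
  destruct (band_operator_bound _ _ (band_operator_adjmat a w Hop)) as [M' [HM'0 HM']].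
  set (mu := nu (adjmat a) w) in Hmu.
  set (M := Rmax M0 mu).
  assert (HMpos : 0 < M) by (pose proof (Rmax_l M0 mu); unfold M; lra).
  assert (HmuM : mu <= M) by apply Rmax_r.
  assert (HM : forall x, in_l2 x -> in_l2 (bapply a w x) /\ l2norm (bapply a w x) <= M * l2norm x).
  { intros x Hx. destruct (HM0 x Hx) as [H1 H2]. split; auto. eapply Rle_trans. apply H2.
    apply Rmult_le_compat_r. apply l2norm_nonneg. apply Rmax_l. }
  assert (Hmu' : forall z, in_l2 z -> mu * l2norm z <= l2norm (bapply (adjmat a) w z))
    by (intros z Hz; apply nu_le; auto; apply band_operator_adjmat; auto).
  pose proof (contraction_ratio_bounds M mu HMpos ltac:(lra) HmuM) as Hr.
  set (q := sqrt (1 - mu ^ 2 / M ^ 2)).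
  assert (Hq : 0 <= q < 1).
  { split. apply sqrt_pos. rewrite <- sqrt_1. apply sqrt_lt_1_alt. split; [lra |].
    assert (0 < mu ^ 2 / M ^ 2) by (apply Rdiv_lt_0_compat; apply pow_lt; auto). lra. }
  apply (landweber_preimage a w (/ M ^ 2) q M M' y); auto.
  - apply Rinv_0_lt_compat, pow_lt; auto.
  - lra.
  - lra.
  - apply (landweber_contract a w M M' mu); auto. apply Hop. lra.
Qed.

(** * Linear dependence *)

Definition skip (k0 k : nat) : nat := if Nat.ltb k k0 then k else S k.
Definition unskip (k0 k : nat) : nat := if Nat.ltb k k0 then k else pred k.

Lemma skip_neq k0 k : skip k0 k <> k0.
Proof. unfold skip. destruct (Nat.ltb_spec k k0); lia. Qed.

Lemma unskip_skip k0 k : unskip k0 (skip k0 k) = k.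
Proof.
  unfold skip, unskip. destruct (Nat.ltb_spec k k0).
  - destruct (Nat.ltb_spec k k0); lia.
  - destruct (Nat.ltb_spec (S k) k0); lia.
Qed.

Lemma skip_lt k0 k p : (k < p)%nat -> (skip k0 k < S p)%nat.
Proof. unfold skip. destruct (Nat.ltb_spec k k0); lia. Qed.

Lemma csum_skip p (h : nat -> C) k0 : (k0 <= p)%nat ->
  csum (S p) h = (csum p (fun k => h (skip k0 k)) + h k0)%C.
Proof.
  induction p; intros Hk.
  - replace k0 with O by lia. simpl. ring.
  - change (csum (S (S p)) h) with (csum (S p) h + h (S p))%C.
    destruct (Nat.eq_dec k0 (S p)) as [-> | Hne].
    + f_equal. apply csum_ext. intros k Hk'. unfold skip. destruct (Nat.ltb_spec k (S p)); auto; lia.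
    + rewrite IHp by lia. simpl csum.
      replace (skip k0 p) with (S p) by (unfold skip; destruct (Nat.ltb_spec p k0); lia). ring.
Qed.

(* Gaussian elimination on the last coordinate [m]: some vector [F k0] with a nonzero
   entry there is used to clear that entry from the others. *)
Lemma lin_dep_of_lt m p (F : nat -> nat -> C) : (m < p)%nat ->
  exists g : nat -> C, (exists k, (k < p)%nat /\ g k <> 0%C) /\
    forall c, (c < m)%nat -> csum p (fun k => g k * F k c)%C = 0%C.
Proof.
  revert p F. induction m; intros p F Hp.
  { exists (fun _ => 1%C). split; [exists O; split; [lia | apply C1_nz] | intros; lia]. }
  destruct (classic (exists k0, (k0 < p)%nat /\ F k0 m <> 0%C)) as [[k0 [Hk0 Hnz]] | Hall].
  - destruct p as [| p']; [lia |].
    set (G := fun k c => (F (skip k0 k) c - F (skip k0 k) m / F k0 m * F k0 c)%C).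
    destruct (IHm p' G ltac:(lia)) as [g' [[k1 [Hk1 Hg'1]] Hg']].
    set (Sm := csum p' (fun j => g' j * F (skip k0 j) m)%C).
    set (g := fun k => if Nat.eqb k k0 then (- Sm / F k0 m)%C else g' (unskip k0 k)).
    assert (Hgs : forall k, g (skip k0 k) = g' k).
    { intros k. unfold g. destruct (Nat.eqb_spec (skip k0 k) k0) as [E | _].
      - exfalso; eapply skip_neq; eauto.
      - rewrite unskip_skip. auto. }
    exists g. split.
    + exists (skip k0 k1). split. apply skip_lt; auto. rewrite Hgs. auto.
    + intros c Hc. rewrite (csum_skip p' _ k0) by lia.
      rewrite (csum_ext p' _ (fun k => g' k * F (skip k0 k) c)%C) by (intros; rewrite Hgs; auto).
      replace (g k0) with (- Sm / F k0 m)%C by (unfold g; rewrite Nat.eqb_refl; reflexivity).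
      destruct (Nat.eq_dec c m) as [-> | Hcm].
      * fold Sm. field. auto.
      * specialize (Hg' c ltac:(lia)). unfold G in Hg'.
        rewrite (csum_ext p' _ (fun k => g' k * F (skip k0 k) c
                                          + - (g' k * F (skip k0 k) m * (F k0 c / F k0 m)))%C) in Hg'
          by (intros; field; auto).
        rewrite csum_plus, csum_opp, csum_scal_r in Hg'. fold Sm in Hg'.
        replace (- Sm / F k0 m * F k0 c)%C with (- (Sm * (F k0 c / F k0 m)))%C by (field; auto).
        rewrite <- Hg'. ring.
  - destruct (IHm p F ltac:(lia)) as [g [Hg1 Hg2]]. exists g. split; auto.
    intros c Hc. destruct (Nat.eq_dec c m) as [-> | Hcm]; [| apply Hg2; lia].
    apply csum_eq0. intros k Hk. destruct (Ceq_dec (F k m) 0%C) as [E | E].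
    + rewrite E. ring.
    + exfalso. apply Hall. eauto.
Qed.

(** * Translates and disjointly supported combinations *)

Definition zshift (s : Z) (v : seqZ) : seqZ := fun i => v (i - s)%Z.

Lemma zshift_supp v lo hi s : supp_in v lo hi -> supp_in (zshift s v) (lo + s) (hi + s).
Proof. intros H i Hi. apply H. lia. Qed.

Lemma l2sq_zshift v lo hi s : supp_in v lo hi -> (lo <= hi)%Z ->
  in_l2 (zshift s v) /\ l2sq (zshift s v) = l2sq v.
Proof.
  intros H Hl. destruct (supp_l2 _ _ _ (zshift_supp v lo hi s H)) as [H1 H2]; [lia |].
  split; auto. rewrite H2, (proj2 (supp_l2 v lo hi H Hl)). unfold nsq, zshift.
  rewrite <- zsum_shift. apply zsum_ext. intros. do 3 f_equal. lia.
Qed.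

(* The submatrix of [b] at offset [-n-1] sees exactly the entries [b i j] with
   [i] in [-n-w, n+w) and [j] in [-n, n) that act on such a [v]. *)
Lemma bapply_zshift b w n k' v : banded b w ->
  same_submatrix b w (2 * n) (- Z.of_nat n - 1) k' ->
  supp_in v (- Z.of_nat n) (Z.of_nat n) ->
  bapply b w (zshift (k' + Z.of_nat n + 1) v) = zshift (k' + Z.of_nat n + 1) (bapply b w v).
Proof.
  intros Hb Hss Hv. set (s := (k' + Z.of_nat n + 1)%Z). apply functional_extensionality; intros i.
  unfold zshift at 2.
  rewrite (bapply_supp b w _ (- Z.of_nat n + s) (Z.of_nat n + s)) by (auto; apply zshift_supp; auto).
  rewrite (bapply_supp b w v (- Z.of_nat n) (Z.of_nat n)) by auto.
  rewrite <- czsum_shift. apply czsum_ext. intros l Hl. unfold zshift.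
  replace (l + s - s)%Z with l by lia. f_equal.
  destruct (Z_lt_le_dec (Z.of_nat w) (Z.abs (i - (l + s)))) as [Hf | Hn].
  - rewrite !Hb by lia. auto.
  - specialize (Hss (i - s + Z.of_nat n + 1)%Z (l + Z.of_nat n + 1)%Z).
    replace (k' + (i - s + Z.of_nat n + 1))%Z with i in Hss by (unfold s; lia).
    replace (k' + (l + Z.of_nat n + 1))%Z with (l + s)%Z in Hss by (unfold s; lia).
    replace (- Z.of_nat n - 1 + (i - s + Z.of_nat n + 1))%Z with (i - s)%Z in Hss by lia.
    replace (- Z.of_nat n - 1 + (l + Z.of_nat n + 1))%Z with l in Hss by lia.
    apply Hss; lia.
Qed.

Lemma zshift_disjoint x lo hi s s' i : supp_in x lo hi -> (hi - lo < Z.abs (s - s'))%Z ->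
  zshift s x i = 0%C \/ zshift s' x i = 0%C.
Proof.
  intros Hx Hs. unfold zshift.
  destruct (Z_lt_le_dec (i - s) lo); [left; apply Hx; lia |].
  destruct (Z_lt_le_dec (i - s) hi); [right; apply Hx; lia | left; apply Hx; lia].
Qed.

Lemma separated_sequence (P : Z -> Prop) (D : Z) :
  (forall M, exists k, (M < Z.abs k)%Z /\ P k) ->
  exists ks : nat -> Z, (forall j, P (ks j)) /\
    forall j l, (j < l)%nat -> (D < Z.abs (ks j - ks l))%Z.
Proof.
  intros HP. destruct (choice _ HP) as [f Hf].
  set (ks := nat_rect (fun _ => Z) (f 0%Z) (fun _ k => f (Z.abs k + Z.abs D)%Z)).
  assert (Hgrow : forall j l, (j < l)%nat -> (Z.abs (ks j) + Z.abs D < Z.abs (ks l))%Z).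
  { intros j l Hjl. induction Hjl as [| l Hjl IH]; simpl; [apply Hf |].
    pose proof (proj1 (Hf (Z.abs (ks l) + Z.abs D)%Z)). simpl in *. lia. }
  exists ks. split.
  - intros [| j]; apply Hf.
  - intros j l Hjl. pose proof (Hgrow j l Hjl). lia.
Qed.

Lemma bounded_on_lt (f : nat -> Z) d : exists K, forall j, (j < d)%nat -> (Z.abs (f j) <= K)%Z.
Proof.
  induction d as [| d [K HK]]; [exists 0%Z; intros; lia |].
  exists (Z.max K (Z.abs (f d))). intros j Hj.
  destruct (Nat.eq_dec j d) as [-> | Hne]; [lia |]. specialize (HK j ltac:(lia)). lia.
Qed.

(* The shifts are [k' + n + 1] for recurrences [k'] of the submatrix at [-n-1]. *)
Lemma separated_translates b w n (D : Z) : banded b w -> self_contained b w ->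
  exists s : nat -> Z,
    (forall j v, supp_in v (- Z.of_nat n) (Z.of_nat n) ->
       bapply b w (zshift (s j) v) = zshift (s j) (bapply b w v)) /\
    (forall j l, j <> l -> (D < Z.abs (s j - s l))%Z).
Proof.
  intros Hb Hsc.
  destruct (separated_sequence (same_submatrix b w (2 * n) (- Z.of_nat n - 1)) D
              (fun M => Hsc (2 * n)%nat (- Z.of_nat n - 1)%Z M)) as [ks [Hks Hsep]].
  exists (fun j => (ks j + Z.of_nat n + 1)%Z). split.
  - intros j v Hv. apply bapply_zshift; auto.
  - intros j l Hjl. destruct (Nat.lt_total j l) as [H | [H | H]]; [| lia |];
      [pose proof (Hsep j l H) | pose proof (Hsep l j H)]; lia.
Qed.

Definition combo d (g : nat -> C) (vs : nat -> seqZ) : seqZ :=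
  fun i => csum d (fun k => g k * vs k i)%C.

Lemma bapply_combo b w d g vs : bapply b w (combo d g vs) = combo d g (fun k => bapply b w (vs k)).
Proof.
  induction d.
  - apply bapply_vzero.
  - change (combo (S d) g vs) with (vadd (combo d g vs) (vscal (g d) (vs d))).
    rewrite bapply_vadd, bapply_vscal, IHd. reflexivity.
Qed.

Lemma Cmod2_csum_disjoint d (f : nat -> C) :
  (forall k l, (k < d)%nat -> (l < d)%nat -> k <> l -> f k = 0%C \/ f l = 0%C) ->
  Cmod (csum d f) ^ 2 = rsum d (fun k => Cmod (f k) ^ 2).
Proof.
  induction d; intros H; cbn [csum rsum]; [rewrite Cmod_0; ring |].
  destruct (Ceq_dec (f d) 0%C) as [E | E].
  - rewrite E, Cmod_0, Cplus_0_r, IHd by (intros; apply H; lia). ring.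
  - assert (Hz : forall k, (k < d)%nat -> f k = 0%C).
    { intros k Hk. destruct (H k d ltac:(lia) ltac:(lia) ltac:(lia)); auto. contradiction. }
    rewrite csum_eq0 by exact Hz. rewrite rsum_eq0 by (intros k Hk; rewrite Hz, Cmod_0 by exact Hk; ring).
    rewrite Cplus_0_l. ring.
Qed.

Lemma l2sq_combo_disjoint d g vs lo hi : (lo <= hi)%Z ->
  (forall k, (k < d)%nat -> supp_in (vs k) lo hi) ->
  (forall i k l, (k < d)%nat -> (l < d)%nat -> k <> l -> vs k i = 0%C \/ vs l i = 0%C) ->
  in_l2 (combo d g vs) /\ l2sq (combo d g vs) = rsum d (fun k => Cmod (g k) ^ 2 * l2sq (vs k)).
Proof.
  intros Hl Hs Hd.
  assert (Hc : supp_in (combo d g vs) lo hi).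
  { intros i Hi. apply csum_eq0. intros k Hk. rewrite (Hs k Hk) by auto. ring. }
  destruct (supp_l2 _ _ _ Hc Hl) as [H1 H2]. split; auto. rewrite H2.
  rewrite (rsum_ext d _ (fun k => zsum lo hi (fun i => Cmod (g k * vs k i)%C ^ 2))).
  2:{ intros k Hk. rewrite (proj2 (supp_l2 _ _ _ (Hs k Hk) Hl)). unfold nsq. rewrite <- zsum_scal.
      apply zsum_ext. intros. rewrite Cmod_mult. ring. }
  replace (rsum d (fun k => zsum lo hi (fun i => Cmod (g k * vs k i)%C ^ 2)))
    with (zsum lo hi (fun i => rsum d (fun k => Cmod (g k * vs k i)%C ^ 2)))
    by (unfold zsum; apply rsum_swap).
  apply zsum_ext. intros i _. apply Cmod2_csum_disjoint.
  intros k l Hk Hl' Hkl. destruct (Hd i k l Hk Hl' Hkl) as [E | E]; [left | right]; rewrite E; ring.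
Qed.

Definition zwindow (lo : Z) (n : nat) (f : nat -> C) : seqZ :=
  fun u => if andb (Z.leb lo u) (Z.ltb u (lo + Z.of_nat n)) then f (Z.to_nat (u - lo)) else 0%C.

Lemma zwindow_supp lo n f : supp_in (zwindow lo n f) lo (lo + Z.of_nat n).
Proof.
  intros u Hu. unfold zwindow.
  destruct (Z.leb_spec lo u), (Z.ltb_spec u (lo + Z.of_nat n)); simpl; auto; lia.
Qed.

Lemma zwindow_at lo n f t : (t < n)%nat -> zwindow lo n f (lo + Z.of_nat t)%Z = f t.
Proof.
  intros Ht. unfold zwindow.
  destruct (Z.leb_spec lo (lo + Z.of_nat t)), (Z.ltb_spec (lo + Z.of_nat t) (lo + Z.of_nat n));
    simpl; try lia.
  f_equal. lia.
Qed.

(* In the window [-R, R) of dimension 2R, the [d > 2w] vectors [vs k] and the 2R - 2w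
   columns [A^* e_u], [u] in [-R+w, R-w), are linearly dependent. *)
Lemma adjmat_range_meets_span b w d (vs : nat -> seqZ) (Rn : nat) :
  banded b w -> (2 * w < d)%nat -> (w <= Rn)%nat ->
  (forall k, (k < d)%nat -> supp_in (vs k) (- Z.of_nat Rn) (Z.of_nat Rn)) ->
  exists g delta, supp_in delta (- Z.of_nat Rn + Z.of_nat w) (Z.of_nat Rn - Z.of_nat w) /\
    combo d g vs = bapply (adjmat b) w delta /\
    ((exists k, (k < d)%nat /\ g k <> 0%C) \/ exists u, delta u <> 0%C).
Proof.
  intros Hb Hd HRn Hvs. set (R := Z.of_nat Rn). set (W := Z.of_nat w).
  set (nr := (2 * Rn - 2 * w)%nat).
  replace (R - W)%Z with (- R + W + Z.of_nat nr)%Z by (unfold nr, R, W; lia).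
  set (F := fun k c => if Nat.ltb k d then vs k (- R + Z.of_nat c)%Z
                       else Cconj (b (- R + W + Z.of_nat (k - d))%Z (- R + Z.of_nat c)%Z)).
  destruct (lin_dep_of_lt (2 * Rn) (d + nr) F ltac:(unfold nr; lia)) as [g [[k1 [Hk1 Hgk1]] Hdep]].
  set (delta := zwindow (- R + W) nr (fun t => - g (d + t)%nat)%C).
  assert (Hcol : forall c, (c < 2 * Rn)%nat ->
            combo d g vs (- R + Z.of_nat c)%Z = bapply (adjmat b) w delta (- R + Z.of_nat c)%Z).
  { intros c Hc. specialize (Hdep c Hc). rewrite csum_split in Hdep.
    rewrite (csum_ext d _ (fun k => g k * vs k (- R + Z.of_nat c)%Z)%C) in Hdep
      by (intros k Hk; unfold F; destruct (Nat.ltb_spec k d); [auto | lia]).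
    set (col := fun t => (g (d + t)%nat * Cconj (b (- R + W + Z.of_nat t)%Z (- R + Z.of_nat c)%Z))%C).
    rewrite (csum_ext nr _ col) in Hdep.
    2:{ intros t Ht. unfold F, col. destruct (Nat.ltb_spec (d + t) d); [lia |].
        replace (d + t - d)%nat with t by lia. auto. }
    rewrite (bapply_supp (adjmat b) w delta _ _ _ (banded_adjmat b w Hb) (zwindow_supp _ _ _)).
    rewrite czsum_csum. replace (Z.to_nat (- R + W + Z.of_nat nr - (- R + W))) with nr by lia.
    rewrite (csum_ext nr _ (fun t => - col t)%C), csum_opp.
    2:{ intros t Ht. unfold delta. rewrite zwindow_at by exact Ht. unfold adjmat, col. ring. }
    transitivity ((csum d (fun k => g k * vs k (- R + Z.of_nat c)%Z) + csum nr col) - csum nr col)%C;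
      [unfold combo; ring | rewrite Hdep; ring]. }
  exists g, delta. split; [apply zwindow_supp | split].
  - apply functional_extensionality; intros i.
    destruct (classic (- R <= i < R)%Z) as [Hi | Hout].
    + replace i with (- R + Z.of_nat (Z.to_nat (i + R)))%Z by lia.
      apply Hcol. unfold R in *. lia.
    + rewrite (bapply_supp_out (adjmat b) w delta (- R + W) (- R + W + Z.of_nat nr))
        by (try apply banded_adjmat; try apply zwindow_supp; auto; unfold nr, R, W in *; lia).
      apply csum_eq0. intros k Hk. rewrite (Hvs k Hk) by lia. ring.
  - destruct (Nat.lt_ge_cases k1 d) as [Hk1d | Hk1d]; [left; eauto | right].
    exists (- R + W + Z.of_nat (k1 - d))%Z. unfold delta. rewrite zwindow_at by (unfold nr in *; lia).
    replace (d + (k1 - d))%nat with k1 by lia.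
    intros E. apply Hgk1. replace (g k1) with (- - g k1)%C by ring. rewrite E. ring.
Qed.

(** * nu(A^* ) <= nu(A) for self-contained A *)

Lemma self_contained_adjmat a w : self_contained a w -> self_contained (adjmat a) w.
Proof.
  intros H N k M.
  destruct (H (N + 2 * w)%nat (k - Z.of_nat w)%Z (M + Z.of_nat w)%Z) as [k'' [Hk'' Hss]].
  exists (k'' + Z.of_nat w)%Z. split; [lia |].
  intros i j Hi Hj. unfold adjmat. f_equal.
  specialize (Hss (j + Z.of_nat w)%Z (i + Z.of_nat w)%Z ltac:(lia) ltac:(lia)).
  replace (k'' + Z.of_nat w + j)%Z with (k'' + (j + Z.of_nat w))%Z by lia.
  replace (k'' + Z.of_nat w + i)%Z with (k'' + (i + Z.of_nat w))%Z by lia.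
  rewrite Hss. f_equal; lia.
Qed.

Lemma translates_isometric_span b w n v d : band_operator b w -> self_contained b w ->
  supp_in v (- Z.of_nat n) (Z.of_nat n) -> in_l2 v -> l2norm v = 1 ->
  exists (vs : nat -> seqZ) (Rn : nat), (w <= Rn)%nat /\
    (forall k, (k < d)%nat -> supp_in (vs k) (- Z.of_nat Rn) (Z.of_nat Rn)) /\
    forall g, l2sq (combo d g vs) = rsum d (fun k => Cmod (g k) ^ 2) /\
      l2sq (bapply b w (combo d g vs)) = l2norm (bapply b w v) ^ 2 * rsum d (fun k => Cmod (g k) ^ 2).
Proof.
  intros Hop Hsc Hv Hvl Hv1. pose proof Hop as [Hb _].
  set (nz := Z.of_nat n). set (wz := Z.of_nat w).
  destruct (separated_translates b w n (2 * nz + 2 * wz) Hb Hsc) as [s [Hshift Hsep]].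
  destruct (bounded_on_lt s d) as [K HK].
  set (Rn := (Z.to_nat K + n + w)%nat).
  set (Bv := bapply b w v).
  assert (HBv : supp_in Bv (- nz - wz) (nz + wz)) by (apply bapply_supp_out; auto; lia).
  assert (HBvl : in_l2 Bv) by exact (proj1 (supp_l2 _ _ _ HBv ltac:(lia))).
  assert (Hv' : supp_in v (- nz - wz) (nz + wz)) by (intros i Hi; apply Hv; lia).
  assert (Hwin : forall x, supp_in x (- nz - wz) (nz + wz) ->
            forall k, (k < d)%nat -> supp_in (zshift (s k) x) (- Z.of_nat Rn) (Z.of_nat Rn)).
  { intros x Hx k Hk i Hi. apply (zshift_supp x _ _ (s k) Hx).
    specialize (HK k Hk). unfold Rn, nz, wz in *. lia. }
  assert (Hdisj : forall x, supp_in x (- nz - wz) (nz + wz) -> forall i k l, (k < d)%nat -> (l < d)%nat ->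
            k <> l -> zshift (s k) x i = 0%C \/ zshift (s l) x i = 0%C).
  { intros x Hx i k l _ _ Hkl. apply (zshift_disjoint x _ _ _ _ i Hx). specialize (Hsep k l Hkl). lia. }
  assert (Hsq : forall x k, supp_in x (- nz - wz) (nz + wz) -> in_l2 x ->
            l2sq (zshift (s k) x) = l2norm x ^ 2).
  { intros x k Hx Hxl. rewrite (proj2 (l2sq_zshift x _ _ (s k) Hx ltac:(lia))), l2norm_sq; auto. }
  exists (fun j => zshift (s j) v), Rn.
  split; [unfold Rn; lia | split; [intros k Hk; apply Hwin; auto |]].
  intros g. split.
  - rewrite (proj2 (l2sq_combo_disjoint d g _ (- Z.of_nat Rn) (Z.of_nat Rn) ltac:(lia)
                      (Hwin v Hv') (fun i => Hdisj v Hv' i))).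
    apply rsum_ext. intros k _. rewrite Hsq, Hv1 by auto. ring.
  - rewrite bapply_combo.
    rewrite (functional_extensionality _ _ (fun j => Hshift j v Hv)). fold Bv.
    rewrite (proj2 (l2sq_combo_disjoint d g _ (- Z.of_nat Rn) (Z.of_nat Rn) ltac:(lia)
                      (Hwin Bv HBv) (fun i => Hdisj Bv HBv i))).
    rewrite <- rsum_scal. apply rsum_ext. intros k _. rewrite Hsq by auto. ring.
Qed.

(* For finitely supported [delta]: ||A^* delta||^2 = <delta, A A^* delta>. *)
Lemma l2sq_adjmat_le b w delta lo hi : banded b w -> supp_in delta lo hi -> (lo <= hi)%Z ->
  l2sq (bapply (adjmat b) w delta) <= l2norm delta * l2norm (bapply b w (bapply (adjmat b) w delta)).
Proof.
  intros Hb Hd Hlh. set (W := Z.of_nat w). set (V := bapply (adjmat b) w delta).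
  assert (HV : supp_in V (lo - W) (hi + W)) by (apply bapply_supp_out; auto; apply banded_adjmat; auto).
  assert (HAV : supp_in (bapply b w V) (lo - W - W) (hi + W + W)) by (apply bapply_supp_out; auto; lia).
  rewrite (proj2 (supp_l2 V _ _ HV ltac:(lia))), <- ip_self.
  unfold V at 1. rewrite <- (adjmat_involutive b) at 2.
  rewrite (ip_bapply_adjmat (adjmat b) w delta V lo hi) by (auto; apply banded_adjmat; auto).
  rewrite adjmat_involutive.
  eapply Rle_trans. apply ip_cauchy_schwarz.
  apply Rmult_le_compat; try apply sqrt_pos; apply sqrt_nsq_le_l2norm.
  - apply (supp_l2 _ _ _ Hd Hlh).
  - apply (supp_l2 _ _ _ HAV). lia.
Qed.

Lemma nu_adjmat_le b w : band_operator b w -> self_contained b w -> nu (adjmat b) w <= nu b w.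
Proof.
  intros Hop Hsc. pose proof Hop as [Hb _].
  set (al := nu (adjmat b) w). apply Rnot_lt_le. intros Hlt.
  pose proof (nu_nonneg b w).
  destruct (nu_approx_supp b w ((al - nu b w) / 2) Hop ltac:(lra))
    as [n [Hn [v [Hvs [Hvl [Hv1 HBv]]]]]].
  set (be := l2norm (bapply b w v)) in HBv.
  assert (Hbe : 0 <= be < al) by (split; [apply l2norm_nonneg | lra]).
  set (d := (2 * w + 1)%nat).
  destruct (translates_isometric_span b w n v d Hop Hsc Hvs Hvl Hv1) as [vs [Rn [HRn [Hsupp Hiso]]]].
  destruct (adjmat_range_meets_span b w d vs Rn Hb ltac:(unfold d; lia) HRn Hsupp)
    as [g [delta [Hdelta [HV Hnontriv]]]].
  set (G := rsum d (fun k => Cmod (g k) ^ 2)).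
  destruct (Hiso g) as [HVn HAVn]. fold be G in HVn, HAVn. rewrite HV in HVn, HAVn.
  destruct (supp_l2 delta _ _ Hdelta ltac:(lia)) as [Hdl _].
  assert (HG0 : 0 <= G) by (apply rsum_nonneg; intros; apply pow2_ge_0).
  assert (HVnorm : l2norm (bapply (adjmat b) w delta) = sqrt G)
    by (unfold l2norm; fold (l2sq (bapply (adjmat b) w delta)); rewrite HVn; reflexivity).
  assert (HAVnorm : l2norm (bapply b w (bapply (adjmat b) w delta)) = be * sqrt G).
  { unfold l2norm. fold (l2sq (bapply b w (bapply (adjmat b) w delta))).
    rewrite HAVn, sqrt_mult, sqrt_pow2 by (try apply pow2_ge_0; lra). reflexivity. }
  assert (Hlow : al * l2norm delta <= sqrt G).
  { rewrite <- HVnorm. apply nu_le; auto. apply band_operator_adjmat; auto. }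
  assert (Hup : G <= l2norm delta * (be * sqrt G)).
  { rewrite <- HAVnorm. rewrite <- HVn at 1. apply (l2sq_adjmat_le b w delta _ _ Hb Hdelta). lia. }
  (* [al G <= al ||delta|| be sqrt G <= be G] with [be < al] forces [G = 0], then [delta = 0]. *)
  assert (HGz : G = 0).
  { pose proof (sqrt_sqrt G HG0). pose proof (sqrt_pos G).
    assert (al * G <= al * (l2norm delta * (be * sqrt G))) by (apply Rmult_le_compat_l; lra).
    assert (al * l2norm delta * (be * sqrt G) <= sqrt G * (be * sqrt G))
      by (apply Rmult_le_compat_r; [apply Rmult_le_pos |]; lra).
    nra. }
  assert (Hdz : l2norm delta = 0).
  { rewrite HGz, sqrt_0 in Hlow. pose proof (l2norm_nonneg delta). nra. }
  destruct Hnontriv as [[k [Hk Hgk]] | [u Hu]].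
  - pose proof (pow_lt _ 2 (proj1 (Cmod_gt_0 _) Hgk)).
    pose proof (rsum_ge_term d (fun k => Cmod (g k) ^ 2) k (fun j _ => pow2_ge_0 _) Hk) as Hterm.
    fold G in Hterm. lra.
  - apply Hu. apply (l2norm_eq0 delta Hdl Hdz).
Qed.

(** * The norm of the inverse *)

Lemma nu_adjmat_eq a w : band_operator a w -> self_contained a w -> nu a w = nu (adjmat a) w.
Proof.
  intros Hop Hsc. apply Rle_antisym; [| apply nu_adjmat_le; auto].
  pose proof (nu_adjmat_le (adjmat a) w (band_operator_adjmat a w Hop) (self_contained_adjmat a w Hsc))
    as H. rewrite adjmat_involutive in H. exact H.
Qed.

Lemma bapply_injective a w x x' : band_operator a w -> 0 < nu a w -> in_l2 x -> in_l2 x' ->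
  (forall i, bapply a w x i = bapply a w x' i) -> forall i, x i = x' i.
Proof.
  intros Hop Hnu Hx Hx' HA i.
  destruct (l2_vsub x x' Hx Hx') as [Hd _].
  pose proof (nu_le a w _ Hop Hd) as Hn. rewrite bapply_vsub in Hn.
  rewrite (proj2 (l2_vzero_eq (vsub (bapply a w x) (bapply a w x'))
                    (fun j => ltac:(unfold vsub; rewrite HA; ring)))) in Hn.
  assert (Hz : l2norm (vsub x x') = 0) by (pose proof (l2norm_nonneg (vsub x x')); nra).
  pose proof (l2norm_eq0 _ Hd Hz i) as E. unfold vsub in E.
  replace (x i) with ((x i - x' i) + x' i)%C by ring. rewrite E. ring.
Qed.

Lemma invertible_of_nu_pos a w : band_operator a w -> 0 < nu a w -> 0 < nu (adjmat a) w ->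
  invertible a w.
Proof.
  intros Hop Hnu Hnu' y Hy. destruct (band_surjective a w Hop Hnu' y Hy) as [x [Hx HAx]].
  exists x. repeat split; auto. intros x' Hx' HAx'.
  apply (bapply_injective a w); auto. intros i. rewrite HAx, HAx'. reflexivity.
Qed.

Definition invset a w := fun r => exists y : seqZ, in_l2 y /\ l2norm y = 1 /\
  exists x : seqZ, in_l2 x /\ (forall i, bapply a w x i = y i) /\ r = l2norm x.

Lemma bapply_unit_pos a w x : band_operator a w -> invertible a w -> in_l2 x -> l2norm x = 1 ->
  0 < l2norm (bapply a w x).
Proof.
  intros Hop Hinv Hx Hx1. pose proof (l2norm_nonneg (bapply a w x)).
  destruct (Req_dec (l2norm (bapply a w x)) 0) as [E | E]; [exfalso | lra].
  destruct (band_operator_bound a w Hop) as [M [_ HM]].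
  pose proof (l2norm_eq0 _ (proj1 (HM x Hx)) E) as Hz.
  destruct (l2_vzero_eq vzero (fun _ => eq_refl)) as [H0 _].
  destruct (Hinv vzero H0) as [x0 [_ [_ Hu]]].
  assert (Hxz : forall i, x i = vzero i).
  { intros i. rewrite (Hu x Hx Hz i), <- (Hu vzero H0); auto.
    intros j. rewrite bapply_vzero. reflexivity. }
  rewrite (proj2 (l2_vzero_eq x Hxz)) in Hx1. lra.
Qed.

Lemma invset_unit a w x : band_operator a w -> invertible a w -> in_l2 x -> l2norm x = 1 ->
  invset a w (/ l2norm (bapply a w x)).
Proof.
  intros Hop Hinv Hx Hx1. pose proof (bapply_unit_pos a w x Hop Hinv Hx Hx1) as Hc.
  set (c := l2norm (bapply a w x)) in *.
  assert (Hc' : 0 <= / c) by (left; apply Rinv_0_lt_compat; auto).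
  destruct (band_operator_bound a w Hop) as [M [_ HM]]. destruct (HM x Hx) as [HAx _].
  exists (vscal (RtoC (/ c)) (bapply a w x)). split; [apply l2_vscal; auto | split].
  - apply l2norm_normalize; auto.
  - exists (vscal (RtoC (/ c)) x). split; [apply l2_vscal; auto | split].
    + intros i. rewrite bapply_vscal. reflexivity.
    + rewrite l2norm_vscal_R, Hx1 by auto. ring.
Qed.

Lemma inv_norm_not_finite a w : band_operator a w -> invertible a w -> nu a w = 0 ->
  forall r, inv_norm a w <> Finite r.
Proof.
  intros Hop Hinv Hnu r Er. pose proof (Lub_Rbar_correct (invset a w)) as [Hub _].
  change (Lub_Rbar (invset a w)) with (inv_norm a w) in Hub. rewrite Er in Hub.
  destruct e0_unit as [He0 He01].
  assert (Hr : 0 < r).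
  { pose proof (Hub _ (invset_unit a w e0 Hop Hinv He0 He01)) as H. simpl in H.
    pose proof (Rinv_0_lt_compat _ (bapply_unit_pos a w e0 Hop Hinv He0 He01)). lra. }
  assert (/ r <= nu a w); [| pose proof (Rinv_0_lt_compat _ Hr); lra].
  apply (nu_spec a w). intros r0 [x [Hx [Hx1 ->]]].
  pose proof (Hub _ (invset_unit a w x Hop Hinv Hx Hx1)) as H. simpl in H.
  pose proof (bapply_unit_pos a w x Hop Hinv Hx Hx1) as Hpos.
  rewrite <- (Rinv_inv (l2norm (bapply a w x))). apply Rinv_le_contravar; auto.
  apply Rinv_0_lt_compat; auto.
Qed.

Lemma inv_norm_nu_pos a w : band_operator a w -> invertible a w -> 0 < nu a w ->
  inv_norm a w = Finite (1 / nu a w).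
Proof.
  intros Hop Hinv Hnu. apply is_lub_Rbar_unique. split.
  - intros r [y [Hy [Hy1 [x [Hx [HAx ->]]]]]]. simpl.
    pose proof (nu_le a w x Hop Hx) as H. rewrite (bapply_ext a w x y HAx), Hy1 in H.
    apply (Rmult_le_reg_l (nu a w)); auto. field_simplify; lra.
  - pose proof (invset_unit a w e0 Hop Hinv (proj1 e0_unit) (proj2 e0_unit)) as He0.
    intros [b | |] Hb; simpl; auto; [| exact (Hb _ He0)].
    assert (Hb0 : 0 < b).
    { pose proof (Hb _ He0) as H. simpl in H.
      pose proof (Rinv_0_lt_compat _ (bapply_unit_pos a w e0 Hop Hinv (proj1 e0_unit) (proj2 e0_unit))).
      lra. }
    apply Rnot_lt_le. intros Hlt.
    destruct (nu_approx a w (/ b - nu a w)) as [x [Hx [Hx1 HAx]]].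
    { apply (Rmult_lt_compat_l (nu a w)) in Hlt; auto. unfold Rdiv in Hlt.
      rewrite Rmult_1_l, Rinv_r in Hlt by lra.
      apply (Rmult_lt_reg_l b); auto. rewrite Rmult_minus_distr_l, Rinv_r by lra. lra. }
    pose proof (Hb _ (invset_unit a w x Hop Hinv Hx Hx1)) as H. simpl in H.
    replace (nu a w + (/ b - nu a w)) with (/ b) in HAx by ring.
    apply Rinv_lt_contravar in HAx.
    + rewrite Rinv_inv in HAx. lra.
    + apply Rmult_lt_0_compat; [apply bapply_unit_pos |]; auto. apply Rinv_0_lt_compat; auto.
Qed.

Lemma recip_inv_norm_eq_nu a w : band_operator a w -> nu a w = nu (adjmat a) w ->
  nu a w = recip_inv_norm a w.
Proof.
  intros Hop Hadj. pose proof (nu_nonneg a w).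
  unfold recip_inv_norm. destruct (excluded_middle_informative (invertible a w)) as [Hinv | Hninv].
  - destruct (Req_dec (nu a w) 0) as [Hz | Hpos].
    + pose proof (inv_norm_not_finite a w Hop Hinv Hz).
      destruct (inv_norm a w) as [r | |]; auto. exfalso. apply (H0 r). reflexivity.
    + rewrite inv_norm_nu_pos by (auto; lra). field. lra.
  - apply NNPP. intros Hpos. apply Hninv, invertible_of_nu_pos; auto; lra.
Qed.

Theorem lemma3p4 (a : matZ) (w : nat) :
  band_operator a w ->
  self_contained a w ->
  nu a w = nu (adjmat a) w /\
  (forall N : nat, (1 <= N)%nat -> nuN a w (S N) <= nuN a w N) /\
  is_lim_seq (fun N => nuN a w N) (nu a w) /\
  nu a w = recip_inv_norm a w.
Proof.
  intros Hop Hsc. pose proof (nu_adjmat_eq a w Hop Hsc) as Hadj.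
  split; [exact Hadj | split; [| split]].
  - intros N HN. apply nuN_succ_le; auto.
  - apply nuN_cvg; auto.
  - apply recip_inv_norm_eq_nu; auto.
Qed.
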